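(* Let $0\le\lambda<1$ and $0\le\beta\le2\lambda$. Then $C_\beta[f]\in\mathcal{S}^*$ for every $f\in\mathcal{S}^*(\lambda)$.
   Context: $\mathbb{D}$ is the open unit disk; $\mathcal{A}$ the class of analytic $f$ on $\mathbb{D}$ with $f(0)=0$, $f'(0)=1$. For $\lambda<1$, $\mathcal{S}^*(\lambda)=\{f\in\mathcal{A}: f(z)\ne0 \text{ for } z\ne0,\ \mathrm{Re}\,(zf'(z)/f(z))>\lambda \text{ on }\mathbb{D}\}$, and $\mathcal{S}^*=\mathcal{S}^*(0)$ is the class of normalized starlike univalent functions. For $\beta\ge0$ and $f$ analytic on $\mathbb{D}$ with $f(0)=0$, $C_\beta[f](z)=\int_0^z \frac{f(w)}{w(1-w)^\beta}\,dw$ (principal branch of $(1-w)^\beta$). *)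

From Stdlib Require Import Reals.
From Coquelicot Require Import Coquelicot.
Open Scope R_scope.

Definition in_disk (z : C) : Prop := Cmod z < 1.

Definition analytic_on_disk (f : C -> C) : Prop :=
  forall z : C, in_disk z -> @ex_derive C_AbsRing C_NormedModule f z.

Definition principal_arg (u : C) : R :=
  let x := Re u in let y := Im u in
  if Rlt_dec 0 x then atan (y / x)
  else if Rlt_dec x 0 then
    (if Rle_dec 0 y then atan (y / x) + PI else atan (y / x) - PI)
  else if Rlt_dec 0 y then PI / 2
  else if Rlt_dec y 0 then - (PI / 2)
  else 0.

(* Principal branch u^b = exp (b * Log u), Log the principal logarithm
   (only used for u <> 0; the value at u = 0 is irrelevant). *)
Definition cpow_principal (u : C) (b : R) : C :=
  (exp (b * ln (Cmod u)) * cos (b * principal_arg u),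
   exp (b * ln (Cmod u)) * sin (b * principal_arg u)).

Definition normalized_analytic (f : C -> C) : Prop :=
  analytic_on_disk f /\ f (RtoC 0) = RtoC 0 /\ @is_derive C_AbsRing C_NormedModule f (RtoC 0) (RtoC 1).

(* S*(lam): f in A, f(z) <> 0 for z <> 0, and Re (z f'(z)/f(z)) > lam on the
   disk (at z = 0 the quotient is understood by continuity, equal to 1,
   so the condition is imposed for z <> 0). *)
Definition starlike_of_order (lam : R) (f : C -> C) : Prop :=
  normalized_analytic f /\
  (forall z : C, in_disk z -> z <> RtoC 0 -> f z <> RtoC 0) /\
  (forall z : C, in_disk z -> z <> RtoC 0 ->
     forall d : C, @is_derive C_AbsRing C_NormedModule f z d ->
       lam < Re (Cdiv (Cmult z d) (f z))).

Definition starlike (f : C -> C) : Prop := starlike_of_order 0 f.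

(* C_beta[f](z) = int_0^z f(w) / (w (1-w)^beta) dw, the integral taken along
   the segment [0, z], i.e. w = t z, dw = z dt, t in [0,1]. *)
Definition C_beta (beta : R) (f : C -> C) (z : C) : C :=
  @RInt C_R_CompleteNormedModule
    (fun t : R =>
       Cmult (Cdiv (f (Cmult (RtoC t) z))
                   (Cmult (Cmult (RtoC t) z)
                          (cpow_principal (Cminus (RtoC 1) (Cmult (RtoC t) z)) beta)))
             z)
    0 1.

From Stdlib Require Import Reals Lra Lia Psatz Classical IndefiniteDescription.
From Coquelicot Require Import Coquelicot.
Open Scope R_scope.

(* Let g = C_beta[f]. Then g' = h with h(z) = f(z) / (z (1 - z)^beta), and
   q = g / (z g') satisfies z q' = 1 - q Phi where
   Phi = 1 + z h'/h = z f'/f + beta z / (1 - z), so that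
   Re Phi > lam - beta/2 >= 0 (using Re (z / (1 - z)) > -1/2).
   Since q(0) = 1, if Re q vanished in the disk it would first vanish at some
   z0 with Re q >= 0 on the closed disk of radius |z0|; there z0 q'(z0) is real
   and nonpositive, while Re q(z0) = 0 forces 1 - q(z0) Phi(z0) to have
   positive real part or nonzero imaginary part. So Re q > 0, that is,
   Re (z g'/g) > 0.
   That the radial integral C_beta[f] is a primitive of h, which is continuous
   at 0 and holomorphic elsewhere, follows from Goursat's theorem for
   triangles; (1 - z)^beta is holomorphic by the Cauchy-Riemann equations. *)

Ltac cring := apply injective_projections; simpl; first [ring | field].

Lemma Cmod_le_Rabs_sum (x : C) : Cmod x <= Rabs (fst x) + Rabs (snd x).
Proof.
  unfold Cmod. apply Rsqr_incr_0_var; [|pose proof (Rabs_pos (fst x)); pose proof (Rabs_pos (snd x)); lra].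
  rewrite Rsqr_sqrt by nra.
  replace (fst x ^ 2 + snd x ^ 2) with (Rsqr (fst x) + Rsqr (snd x)) by (unfold Rsqr; ring).
  rewrite (Rsqr_abs (fst x)), (Rsqr_abs (snd x)).
  pose proof (Rabs_pos (fst x)); pose proof (Rabs_pos (snd x)). unfold Rsqr. nra.
Qed.

Lemma Cmod_RtoC_mult (r : R) (z : C) : Cmod (RtoC r * z)%C = Rabs r * Cmod z.
Proof. rewrite Cmod_mult, Cmod_R. reflexivity. Qed.

Lemma Re_le_Cmod (c : C) : Re c <= Cmod c.
Proof. pose proof (re_le_Cmod c) as H. apply Rabs_le_between in H. lra. Qed.

Open Scope C_scope.

Lemma Cminus_0_r (z : C) : z - 0 = z.
Proof. ring. Qed.

Lemma Cminus_0_l (z : C) : 0 - z = - z.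
Proof. ring. Qed.

Lemma Cinv_neq_0 (z : C) : z <> 0 -> / z <> 0.
Proof. intros Hz E. apply C1_nz. rewrite <- (Cinv_r z Hz), E. ring. Qed.

Lemma Cmod_minus_sym (a b : C) : Cmod (a - b) = Cmod (b - a).
Proof. rewrite <- Cmod_opp. f_equal. ring. Qed.

Lemma Cmod_reverse_triangle (a b : C) : (Cmod a - Cmod b <= Cmod (a - b))%R.
Proof. pose proof (Cmod_triangle (a - b) b). replace (a - b + b) with a in H by ring. lra. Qed.

Lemma Cmod_minus_triangle (a b : C) : (Cmod (a - b) <= Cmod a + Cmod b)%R.
Proof. rewrite <- (Cmod_opp b). apply Cmod_triangle. Qed.

(** * Complex differentiability in epsilon-delta form *)

Definition is_Cderive (f : C -> C) (z d : C) : Prop :=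
  forall eps : R, (0 < eps)%R -> exists del : R, (0 < del)%R /\
    forall w : C, (Cmod (w - z) < del)%R ->
      (Cmod (f w - f z - d * (w - z)) <= eps * Cmod (w - z))%R.

Definition Ccontinuous (f : C -> C) (z : C) : Prop :=
  forall eps : R, (0 < eps)%R -> exists del : R, (0 < del)%R /\
    forall w : C, (Cmod (w - z) < del)%R -> (Cmod (f w - f z) < eps)%R.

(* Coquelicot's [is_derive] on C comes with two non-convertible normed-module
   structures ([is_derive_mult] uses the second one). *)
Ltac prove_is_Cderive_iff f z d :=
  split;
  [ intros H; split; [apply is_linear_scal_l|];
    intros x Hx;
    apply (@is_filter_lim_locally_unique C_AbsRing (AbsRing_NormedModule C_AbsRing)) in Hx;
    subst x; intros eps; destruct (H eps (cond_pos eps)) as [del [Hdel K]];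
    exists (mkposreal _ Hdel); intros w Hw;
    simpl; unfold AbsRing_ball, abs, minus, plus, opp; simpl;
    change (Cmod (f w - f z - (w - z) * d) <= eps * Cmod (w - z))%R;
    rewrite (Cmult_comm (w - z)); exact (K w Hw)
  | intros [_ H] eps Heps;
    destruct (H _ (fun P HP => HP) (mkposreal _ Heps)) as [del K];
    exists del; split; [apply cond_pos|]; intros w Hw;
    specialize (K w Hw);
    change (Cmod (f w - f z - (w - z) * d) <= eps * Cmod (w - z))%R in K;
    rewrite (Cmult_comm (w - z)) in K; exact K ].

Lemma is_Cderive_iff f z d :
  is_Cderive f z d <-> @is_derive C_AbsRing C_NormedModule f z d.
Proof. prove_is_Cderive_iff f z d. Qed.

Lemma is_Cderive_iff_AbsRing f z d :
  is_Cderive f z d <-> @is_derive C_AbsRing (AbsRing_NormedModule C_AbsRing) f z d.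
Proof. prove_is_Cderive_iff f z d. Qed.

Lemma is_Cderive_plus f g z df dg :
  is_Cderive f z df -> is_Cderive g z dg -> is_Cderive (fun w => f w + g w) z (df + dg).
Proof.
  rewrite !is_Cderive_iff. exact (@is_derive_plus C_AbsRing C_NormedModule f g z df dg).
Qed.

Lemma is_Cderive_mult f g z df dg :
  is_Cderive f z df -> is_Cderive g z dg ->
  is_Cderive (fun w => f w * g w) z (df * g z + f z * dg).
Proof.
  rewrite !is_Cderive_iff_AbsRing. intros Hf Hg.
  exact (@is_derive_mult C_AbsRing f g z df dg Hf Hg Cmult_comm).
Qed.

Lemma is_Cderive_comp f g z df dg :
  is_Cderive f (g z) df -> is_Cderive g z dg -> is_Cderive (fun w => f (g w)) z (dg * df).
Proof.
  intros Hf Hg. apply is_Cderive_iff.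
  apply is_Cderive_iff in Hf. apply is_Cderive_iff_AbsRing in Hg.
  exact (@is_derive_comp C_AbsRing C_NormedModule f g z df dg Hf Hg).
Qed.

Lemma is_Cderive_const (a z : C) : is_Cderive (fun _ => a) z 0.
Proof.
  intros eps Heps. exists 1%R. split; [lra|]. intros w _.
  replace (a - a - 0 * (w - z)) with (RtoC 0) by ring. rewrite Cmod_0.
  apply Rmult_le_pos; [lra | apply Cmod_ge_0].
Qed.

Lemma is_Cderive_id (z : C) : is_Cderive (fun w => w) z 1.
Proof.
  intros eps Heps. exists 1%R. split; [lra|]. intros w _.
  replace (w - z - 1 * (w - z)) with (RtoC 0) by ring. rewrite Cmod_0.
  apply Rmult_le_pos; [lra | apply Cmod_ge_0].
Qed.

Lemma is_Cderive_inv (z : C) : z <> 0 -> is_Cderive (fun w => / w) z (- / (z * z)).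
Proof.
  intros Hz eps Heps.
  assert (Hm : (0 < Cmod z)%R) by (apply Cmod_gt_0; auto).
  exists (Rmin (Cmod z / 2) (eps * (Cmod z * Cmod z * Cmod z) / 2)). split.
  { apply Rmin_pos; [lra|]. assert (0 < Cmod z * Cmod z * Cmod z)%R by (repeat apply Rmult_lt_0_compat; lra).
    nra. }
  intros w Hw.
  assert (Hw1 : (Cmod (w - z) < Cmod z / 2)%R) by (eapply Rlt_le_trans; [exact Hw | apply Rmin_l]).
  assert (Hw2 : (Cmod (w - z) < eps * (Cmod z * Cmod z * Cmod z) / 2)%R)
    by (eapply Rlt_le_trans; [exact Hw | apply Rmin_r]).
  assert (Hwm : (Cmod z / 2 < Cmod w)%R).
  { pose proof (Cmod_reverse_triangle z w). rewrite Cmod_minus_sym in H. lra. }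
  assert (Hw0 : w <> 0) by (intro E; subst; rewrite Cmod_0 in Hwm; lra).
  replace (/ w - / z - - / (z * z) * (w - z)) with ((w - z) * (w - z) / (w * z * z)) by (field; auto).
  rewrite Cmod_div by (repeat apply Cmult_neq_0; auto).
  rewrite !Cmod_mult.
  set (a := Cmod (w - z)) in *. set (m := Cmod z) in *. set (n := Cmod w) in *.
  assert (0 <= a)%R by apply Cmod_ge_0.
  assert (Hnmm : (0 < n * m * m)%R) by (repeat apply Rmult_lt_0_compat; lra).
  apply (Rmult_le_reg_r (n * m * m)); [exact Hnmm|].
  unfold Rdiv. rewrite Rmult_assoc, Rinv_l, Rmult_1_r by lra.
  assert (a * a <= a * (eps * (m * m * m) / 2))%R by (apply Rmult_le_compat_l; lra).
  assert (0 <= eps * a * (m * m))%R by (apply Rmult_le_pos; [apply Rmult_le_pos|]; nra).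
  nra.
Qed.

Lemma is_Cderive_unique f z d1 d2 : is_Cderive f z d1 -> is_Cderive f z d2 -> d1 = d2.
Proof.
  intros H1 H2. destruct (Ceq_dec d1 d2) as [E|NE]; auto. exfalso.
  assert (Hp : (0 < Cmod (d1 - d2))%R) by (apply Cmod_gt_0; intro E; apply NE; apply Ceq_minus; auto).
  set (e := (Cmod (d1 - d2) / 4)%R).
  destruct (H1 e ltac:(unfold e; lra)) as [del1 [Hd1 K1]].
  destruct (H2 e ltac:(unfold e; lra)) as [del2 [Hd2 K2]].
  set (t := (Rmin del1 del2 / 2)%R).
  assert (Hdel : (0 < Rmin del1 del2)%R) by (apply Rmin_pos; auto).
  set (w := z + RtoC t).
  assert (Hwz : Cmod (w - z) = t).
  { unfold w. replace (z + RtoC t - z) with (RtoC t) by ring. rewrite Cmod_R. apply Rabs_pos_eq. unfold t; lra. }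
  specialize (K1 w). specialize (K2 w). rewrite Hwz in K1, K2.
  assert (Ht : (t < Rmin del1 del2)%R) by (unfold t; lra).
  assert (A1 := K1 (Rlt_le_trans _ _ _ Ht (Rmin_l _ _))).
  assert (A2 := K2 (Rlt_le_trans _ _ _ Ht (Rmin_r _ _))).
  assert (Hle : (Cmod ((d1 - d2) * (w - z)) <= 2 * e * t)%R).
  { replace ((d1 - d2) * (w - z)) with ((f w - f z - d2 * (w - z)) - (f w - f z - d1 * (w - z))) by ring.
    eapply Rle_trans; [apply Cmod_minus_triangle|]. lra. }
  rewrite Cmod_mult, Hwz in Hle. unfold e, t in Hle. nra.
Qed.

Lemma is_Cderive_ext_loc f g z d :
  (exists del, (0 < del)%R /\ forall w, (Cmod (w - z) < del)%R -> f w = g w) ->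
  is_Cderive f z d -> is_Cderive g z d.
Proof.
  intros [del0 [Hd0 He]] Hf eps Heps.
  destruct (Hf eps Heps) as [del [Hd H]].
  exists (Rmin del del0). split; [apply Rmin_pos; lra|].
  intros w Hw.
  assert (Hz : f z = g z) by (apply He; replace (z - z) with (RtoC 0) by ring; rewrite Cmod_0; lra).
  rewrite <- He, <- Hz by (eapply Rlt_le_trans; [exact Hw | apply Rmin_r]).
  apply H. eapply Rlt_le_trans; [exact Hw | apply Rmin_l].
Qed.

Lemma is_Cderive_continuous f z d : is_Cderive f z d -> Ccontinuous f z.
Proof.
  intros H eps Heps.
  destruct (H 1%R Rlt_0_1) as [del [Hd K]].
  set (M := (Cmod d + 2)%R).
  assert (HM : (0 < M)%R) by (unfold M; pose proof (Cmod_ge_0 d); lra).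
  exists (Rmin del (eps / M)). split; [apply Rmin_pos; [auto | apply Rdiv_lt_0_compat; lra]|].
  intros w Hw.
  assert (Hw1 : (Cmod (w - z) < del)%R) by (eapply Rlt_le_trans; [exact Hw | apply Rmin_l]).
  assert (Hw2 : (Cmod (w - z) * M < eps)%R).
  { apply (Rmult_lt_reg_r (/ M)); [apply Rinv_0_lt_compat; lra|].
    rewrite Rmult_assoc, Rinv_r, Rmult_1_r by lra.
    eapply Rlt_le_trans; [exact Hw | apply Rmin_r]. }
  specialize (K w Hw1).
  replace (f w - f z) with ((f w - f z - d * (w - z)) + d * (w - z)) by ring.
  eapply Rle_lt_trans; [apply Cmod_triangle|]. rewrite Cmod_mult.
  pose proof (Cmod_ge_0 d). pose proof (Cmod_ge_0 (w - z)). unfold M in Hw2. nra.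
Qed.

Lemma Ccontinuous_const (a z : C) : Ccontinuous (fun _ => a) z.
Proof. exact (is_Cderive_continuous _ _ _ (is_Cderive_const a z)). Qed.

Lemma Ccontinuous_affine (a d z : C) : Ccontinuous (fun w => a + d * w) z.
Proof.
  apply (is_Cderive_continuous _ _ (0 + (0 * z + d * 1))).
  apply is_Cderive_plus; [apply is_Cderive_const|].
  apply is_Cderive_mult; [apply is_Cderive_const | apply is_Cderive_id].
Qed.

Lemma Ccontinuous_minus f g z : Ccontinuous f z -> Ccontinuous g z -> Ccontinuous (fun w => f w - g w) z.
Proof.
  intros H1 H2 eps Heps.
  destruct (H1 (eps / 2)%R ltac:(lra)) as [d1 [Hd1 K1]].
  destruct (H2 (eps / 2)%R ltac:(lra)) as [d2 [Hd2 K2]].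
  exists (Rmin d1 d2). split; [apply Rmin_pos; auto|].
  intros w Hw.
  specialize (K1 w (Rlt_le_trans _ _ _ Hw (Rmin_l _ _))).
  specialize (K2 w (Rlt_le_trans _ _ _ Hw (Rmin_r _ _))).
  replace (f w - g w - (f z - g z)) with ((f w - f z) - (g w - g z)) by ring.
  eapply Rle_lt_trans; [apply Cmod_minus_triangle | lra].
Qed.

(** * Integrals along segments *)

Definition line_integrand (h : C -> C) (a b : C) (s : R) : C :=
  (b - a) * h (a + RtoC s * (b - a)).

Definition line_integral (h : C -> C) (a b : C) : C :=
  @RInt C_R_CompleteNormedModule (line_integrand h a b) 0 1.

Definition continuous_on_segment (h : C -> C) (a b : C) : Prop :=
  forall s : R, (0 <= s <= 1)%R -> Ccontinuous h (a + RtoC s * (b - a)).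

Lemma norm_C_R (x : C_R_NormedModule) : norm x = Cmod x.
Proof.
  change (sqrt (Rabs (fst x) ^ 2 + Rabs (snd x) ^ 2) = Cmod x).
  rewrite !pow2_abs. reflexivity.
Qed.

Lemma continuous_C_R (F : R -> C) (s0 : R) :
  (forall eps, (0 < eps)%R -> exists del, (0 < del)%R /\
     forall s, (Rabs (s - s0) < del)%R -> (Cmod (F s - F s0) < eps)%R) ->
  @continuous R_UniformSpace C_R_CompleteNormedModule F s0.
Proof.
  intros H. apply filterlim_locally. intros eps.
  destruct (H eps (cond_pos eps)) as [del [Hd K]].
  exists (mkposreal _ Hd). intros s Hs.
  specialize (K s Hs). pose proof (Rmax_Cmod (F s - F s0)) as Hm.
  split; simpl; unfold AbsRing_ball, abs, minus, plus, opp; simpl;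
    eapply Rle_lt_trans; [| exact K | | exact K];
    (eapply Rle_trans; [| exact Hm]); [apply Rmax_l | apply Rmax_r].
Qed.

Lemma line_integrand_continuous h a b s0 :
  Ccontinuous h (a + RtoC s0 * (b - a)) ->
  @continuous R_UniformSpace C_R_CompleteNormedModule (line_integrand h a b) s0.
Proof.
  intros Hc. apply continuous_C_R. intros eps Heps.
  set (M := (Cmod (b - a) + 1)%R).
  assert (HM : (0 < M)%R) by (unfold M; pose proof (Cmod_ge_0 (b - a)); lra).
  destruct (Hc (eps / M)%R) as [del [Hd K]]; [apply Rdiv_lt_0_compat; lra|].
  exists (del / M)%R. split; [apply Rdiv_lt_0_compat; lra|].
  intros s Hs. unfold line_integrand.
  assert (Hlt : (Cmod ((a + RtoC s * (b - a)) - (a + RtoC s0 * (b - a))) < del)%R).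
  { replace ((a + RtoC s * (b - a)) - (a + RtoC s0 * (b - a))) with (RtoC (s - s0) * (b - a)) by cring.
    rewrite Cmod_RtoC_mult.
    apply (Rmult_lt_compat_r M) in Hs; [|lra]. unfold Rdiv in Hs.
    rewrite Rmult_assoc, Rinv_l in Hs by lra.
    pose proof (Rabs_pos (s - s0)). pose proof (Cmod_ge_0 (b - a)). unfold M in Hs. nra. }
  specialize (K _ Hlt).
  replace ((b - a) * h (a + RtoC s * (b - a)) - (b - a) * h (a + RtoC s0 * (b - a)))
    with ((b - a) * (h (a + RtoC s * (b - a)) - h (a + RtoC s0 * (b - a)))) by ring.
  rewrite Cmod_mult.
  pose proof (Cmod_ge_0 (b - a)).
  pose proof (Cmod_ge_0 (h (a + RtoC s * (b - a)) - h (a + RtoC s0 * (b - a)))).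
  apply (Rmult_lt_compat_r M) in K; [|lra]. unfold Rdiv in K.
  rewrite Rmult_assoc, Rinv_l in K by lra. unfold M in K. nra.
Qed.

Lemma ex_RInt_line_integrand h a b u v :
  continuous_on_segment h a b -> (0 <= u <= 1)%R -> (0 <= v <= 1)%R ->
  @ex_RInt C_R_CompleteNormedModule (line_integrand h a b) u v.
Proof.
  intros H Hu Hv. apply ex_RInt_continuous. intros s Hs.
  apply line_integrand_continuous, H. split.
  - eapply Rle_trans; [| apply Hs]. apply Rmin_glb; lra.
  - eapply Rle_trans; [apply Hs |]. apply Rmax_lub; lra.
Qed.

Lemma line_integral_subsegment h a b u v :
  continuous_on_segment h a b -> (0 <= u <= 1)%R -> (0 <= v <= 1)%R ->
  line_integral h (a + RtoC u * (b - a)) (a + RtoC v * (b - a)) =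
  @RInt C_R_CompleteNormedModule (line_integrand h a b) u v.
Proof.
  intros H Hu Hv.
  assert (Hex : @ex_RInt C_R_CompleteNormedModule (line_integrand h a b)
                  ((v - u) * 0 + u)%R ((v - u) * 1 + u)%R).
  { replace ((v - u) * 0 + u)%R with u by ring. replace ((v - u) * 1 + u)%R with v by ring.
    apply ex_RInt_line_integrand; auto. }
  pose proof (RInt_comp_lin _ (v - u) u 0 1 Hex) as E.
  replace ((v - u) * 0 + u)%R with u in E by ring. replace ((v - u) * 1 + u)%R with v in E by ring.
  rewrite <- E. apply (@RInt_ext C_R_CompleteNormedModule). intros s _.
  unfold line_integrand. rewrite scal_R_Cmult.
  replace (a + RtoC u * (b - a) + RtoC s * (a + RtoC v * (b - a) - (a + RtoC u * (b - a))))
    with (a + RtoC ((v - u) * s + u) * (b - a)) by cring.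
  cring.
Qed.

Lemma line_integral_swap h a b :
  continuous_on_segment h a b -> line_integral h b a = - line_integral h a b.
Proof.
  intros H.
  pose proof (line_integral_subsegment h a b 1 0 H ltac:(lra) ltac:(lra)) as E.
  replace (a + RtoC 1 * (b - a)) with b in E by ring.
  replace (a + RtoC 0 * (b - a)) with a in E by ring.
  rewrite E, <- opp_RInt_swap by (apply ex_RInt_line_integrand; auto; lra).
  reflexivity.
Qed.

Lemma line_integral_split h a b r :
  continuous_on_segment h a b -> (0 <= r <= 1)%R ->
  line_integral h a b =
  line_integral h a (a + RtoC r * (b - a)) + line_integral h (a + RtoC r * (b - a)) b.
Proof.
  intros H Hr.
  pose proof (line_integral_subsegment h a b 0 r H ltac:(lra) Hr) as E1.
  pose proof (line_integral_subsegment h a b r 1 H Hr ltac:(lra)) as E2.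
  replace (a + RtoC 0 * (b - a)) with a in E1 by ring.
  replace (a + RtoC 1 * (b - a)) with b in E2 by ring.
  rewrite E1, E2.
  symmetry. apply (RInt_Chasles (V := C_R_CompleteNormedModule));
    apply ex_RInt_line_integrand; auto; lra.
Qed.

Lemma line_integral_norm_le h a b (M : R) :
  continuous_on_segment h a b ->
  (forall s, (0 <= s <= 1)%R -> (Cmod (h (a + RtoC s * (b - a))%C) <= M)%R) ->
  (Cmod (line_integral h a b) <= Cmod (b - a) * M)%R.
Proof.
  intros H HM. unfold line_integral. rewrite <- norm_C_R.
  replace (Cmod (b - a) * M)%R with ((1 - 0) * (Cmod (b - a) * M))%R by ring.
  apply (norm_RInt_le (V := C_R_CompleteNormedModule) (line_integrand h a b)
           (fun _ => Cmod (b - a) * M)%R 0 1); [lra | | |].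
  - intros s Hs. rewrite norm_C_R. unfold line_integrand. rewrite Cmod_mult.
    apply Rmult_le_compat_l; [apply Cmod_ge_0 | apply HM; lra].
  - apply RInt_correct, ex_RInt_line_integrand; auto; lra.
  - apply (is_RInt_const (V := R_NormedModule)).
Qed.

Lemma line_integral_minus h1 h2 a b :
  continuous_on_segment h1 a b -> continuous_on_segment h2 a b ->
  line_integral (fun w => h1 w - h2 w) a b = line_integral h1 a b - line_integral h2 a b.
Proof.
  intros H1 H2. unfold line_integral.
  pose proof (RInt_minus (V := C_R_CompleteNormedModule) (line_integrand h1 a b) (line_integrand h2 a b) 0 1
     (ex_RInt_line_integrand h1 a b 0 1 H1 ltac:(lra) ltac:(lra))
     (ex_RInt_line_integrand h2 a b 0 1 H2 ltac:(lra) ltac:(lra))) as E.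
  change (@minus C_R_CompleteNormedModule) with Cminus in E. rewrite <- E.
  apply (@RInt_ext C_R_CompleteNormedModule). intros s _.
  unfold line_integrand. match goal with |- ?l = minus ?x ?y => change (@eq C l (x - y)) end. ring.
Qed.

Lemma line_integral_point h a : line_integral h a a = 0.
Proof.
  unfold line_integral, line_integrand.
  transitivity (@RInt C_R_CompleteNormedModule (fun _ => RtoC 0) 0 1).
  - apply (@RInt_ext C_R_CompleteNormedModule). intros s _.
    match goal with |- ?l = ?r => change (@eq C l r) end. ring.
  - rewrite (@RInt_const C_R_CompleteNormedModule), scal_R_Cmult. ring.
Qed.

Lemma line_integral_const (k a b : C) : line_integral (fun _ => k) a b = k * (b - a).
Proof.
  unfold line_integral, line_integrand.
  rewrite (@RInt_const C_R_CompleteNormedModule), scal_R_Cmult. cring.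
Qed.

Lemma is_RInt_affine_01 (p q : R) : is_RInt (fun s => p + s * q)%R 0 1 (p + q / 2)%R.
Proof.
  set (F := fun s => (p * s + q * (s * s) / 2)%R).
  replace (p + q / 2)%R with (minus (F 1%R) (F 0%R)) by (unfold F, minus, plus, opp; simpl; field).
  apply (is_RInt_derive (V := R_CompleteNormedModule)).
  - intros x _. unfold F. auto_derive; [trivial | field].
  - intros x _. apply (ex_derive_continuous (V := R_NormedModule)). auto_derive. trivial.
Qed.

Lemma line_integral_affine (p q a b : C) :
  line_integral (fun w => p + q * w) a b = (b - a) * (p + q * a) + (b - a) * (b - a) * q * RtoC (1 / 2).
Proof.
  set (A := (b - a) * (p + q * a)). set (B := (b - a) * (b - a) * q).
  transitivity (@RInt C_R_CompleteNormedModule (fun s => A + RtoC s * B) 0 1).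
  { apply (@RInt_ext C_R_CompleteNormedModule). intros s _. unfold line_integrand, A, B. cring. }
  apply (@is_RInt_unique C_R_CompleteNormedModule).
  replace (A + B * RtoC (1 / 2)) with ((fst A + fst B / 2)%R, (snd A + snd B / 2)%R) by cring.
  apply (is_RInt_fct_extend_pair (U := R_NormedModule) (V := R_NormedModule));
    (eapply is_RInt_ext; [| apply is_RInt_affine_01]); intros s _; simpl; ring.
Qed.

Lemma line_integral_affine_triangle (p q x y z : C) :
  (line_integral (fun w => p + q * w) x y + line_integral (fun w => p + q * w) y z
   + line_integral (fun w => p + q * w) z x)%C = 0%C.
Proof. rewrite !line_integral_affine. cring. Qed.

Open Scope R_scope.

Lemma half_pow_lt (y : R) : 0 < y -> exists N, forall n, (N <= n)%nat -> (1/2)^n < y.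
Proof.
  intros Hy. destruct (pow_lt_1_zero (1/2) ltac:(rewrite Rabs_pos_eq; lra) y Hy) as [N HN].
  exists N. intros n Hn. specialize (HN n Hn). rewrite Rabs_pos_eq in HN by (apply pow_le; lra). exact HN.
Qed.

Lemma half_pow_pos n : 0 < (1/2)^n.
Proof. apply pow_lt. lra. Qed.

Lemma geometric_cauchy_limit (u : nat -> R) :
  (forall n m, Rabs (u (n + m)%nat - u n) <= 2 * (1/2)^n) ->
  exists l, forall n, Rabs (l - u n) <= 2 * (1/2)^n.
Proof.
  intros H.
  assert (Hc : Cauchy_crit u).
  { intros eps Heps. destruct (half_pow_lt (eps / 4) ltac:(lra)) as [N HN].
    exists N. intros n m Hn Hm. unfold Rdist.
    pose proof (H N (n - N)%nat) as A1. pose proof (H N (m - N)%nat) as A2.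
    replace (N + (n - N))%nat with n in A1 by lia. replace (N + (m - N))%nat with m in A2 by lia.
    specialize (HN N (le_n N)). apply Rabs_le_between in A1, A2. apply Rabs_def1; lra. }
  destruct (Rcomplete.R_complete u Hc) as [l Hl]. exists l. intros n.
  apply Rabs_le_between.
  split; apply Rle_plus_epsilon; intros eps Heps;
    destruct (Hl eps Heps) as [M HM]; specialize (HM (n + M)%nat ltac:(lia)); unfold Rdist in HM;
    apply Rabs_def2 in HM; specialize (H n M); apply Rabs_le_between in H; lra.
Qed.

Lemma Rle_0_of_le_mult_eps (x M : R) : 0 <= M -> (forall eps, 0 < eps -> x <= M * eps) -> x <= 0.
Proof.
  intros HM H. apply Rle_plus_epsilon. intros e He. rewrite Rplus_0_l.
  eapply Rle_trans; [apply (H (e / (M + 1))); apply Rdiv_lt_0_compat; lra|].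
  apply (Rmult_le_reg_r (M + 1)); [lra|].
  unfold Rdiv. rewrite Rmult_assoc, (Rmult_assoc e), Rinv_l by lra. nra.
Qed.

Lemma Rle_0_of_geometric (x K : R) : (forall n, - (K * (1/2)^n) <= x) -> 0 <= x.
Proof.
  intros H. apply Ropp_le_cancel. rewrite Ropp_0.
  apply (Rle_0_of_le_mult_eps _ (Rmax K 0)); [apply Rmax_r|]. intros eps Heps.
  destruct (half_pow_lt eps Heps) as [N HN]. specialize (HN N (le_n N)).
  pose proof (H N). pose proof (half_pow_pos N). pose proof (Rmax_l K 0). pose proof (Rmax_r K 0).
  nra.
Qed.

(** * Goursat's theorem for triangles *)

(* Points of the closed triangle [a, b, c] are handled through their barycentric
   coordinates, so that the nested triangles stay inside it by construction. *)
Record bary := Bary { bary1 : R; bary2 : R; bary3 : R }.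

Definition bary_in (P : bary) : Prop :=
  0 <= bary1 P /\ 0 <= bary2 P /\ 0 <= bary3 P /\ bary1 P + bary2 P + bary3 P = 1.

Definition bary_mid (P Q : bary) : bary :=
  Bary ((bary1 P + bary1 Q) / 2) ((bary2 P + bary2 Q) / 2) ((bary3 P + bary3 Q) / 2).

Definition bary_comb (P Q : bary) (s : R) : bary :=
  Bary (bary1 P + s * (bary1 Q - bary1 P)) (bary2 P + s * (bary2 Q - bary2 P))
       (bary3 P + s * (bary3 Q - bary3 P)).

Definition bary_close (P Q : bary) (D : R) : Prop :=
  Rabs (bary1 P - bary1 Q) <= D /\ Rabs (bary2 P - bary2 Q) <= D /\ Rabs (bary3 P - bary3 Q) <= D.

Lemma bary_in_comb P Q s : bary_in P -> bary_in Q -> 0 <= s <= 1 -> bary_in (bary_comb P Q s).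
Proof. unfold bary_in, bary_comb; simpl. intros. repeat split; nra. Qed.

Lemma bary_in_mid P Q : bary_in P -> bary_in Q -> bary_in (bary_mid P Q).
Proof. unfold bary_in, bary_mid; simpl. intros. lra. Qed.

Ltac unfold_bary_close :=
  unfold bary_close in *; rewrite ?Rabs_le_between in *.

Lemma bary_close_comb P Q s D : bary_close P Q D -> 0 <= s <= 1 -> bary_close (bary_comb P Q s) P D.
Proof. unfold_bary_close. unfold bary_comb; simpl. intros. repeat split; nra. Qed.

Lemma bary_close_sym P Q D : bary_close P Q D -> bary_close Q P D.
Proof. unfold_bary_close. intros. lra. Qed.

Lemma bary_close_trans P Q R D1 D2 :
  bary_close P Q D1 -> bary_close Q R D2 -> bary_close P R (D1 + D2).
Proof. unfold_bary_close. intros. lra. Qed.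

Lemma bary_close_le P Q D1 D2 : bary_close P Q D1 -> D1 <= D2 -> bary_close P Q D2.
Proof. unfold_bary_close. intros. lra. Qed.

Record tri := Tri { tri1 : bary; tri2 : bary; tri3 : bary }.

Definition tri_in (t : tri) : Prop := bary_in (tri1 t) /\ bary_in (tri2 t) /\ bary_in (tri3 t).

Definition tri_small (t : tri) (D : R) : Prop :=
  bary_close (tri1 t) (tri2 t) D /\ bary_close (tri2 t) (tri3 t) D /\ bary_close (tri3 t) (tri1 t) D.

Definition tri_sub1 t := Tri (tri1 t) (bary_mid (tri1 t) (tri2 t)) (bary_mid (tri3 t) (tri1 t)).
Definition tri_sub2 t := Tri (bary_mid (tri1 t) (tri2 t)) (tri2 t) (bary_mid (tri2 t) (tri3 t)).
Definition tri_sub3 t := Tri (bary_mid (tri3 t) (tri1 t)) (bary_mid (tri2 t) (tri3 t)) (tri3 t).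
Definition tri_sub4 t :=
  Tri (bary_mid (tri1 t) (tri2 t)) (bary_mid (tri2 t) (tri3 t)) (bary_mid (tri3 t) (tri1 t)).

Definition tri_whole : tri := Tri (Bary 1 0 0) (Bary 0 1 0) (Bary 0 0 1).

Section Goursat.

Variables (h : C -> C) (a b c : C).

Definition bary_point (P : bary) : C :=
  (RtoC (bary1 P) * a + RtoC (bary2 P) * b + RtoC (bary3 P) * c)%C.

Hypothesis h_differentiable : forall P, bary_in P -> exists d, is_Cderive h (bary_point P) d.

Let K := Cmod a + Cmod b + Cmod c.

Lemma bary_point_comb P Q s :
  bary_point (bary_comb P Q s) = (bary_point P + RtoC s * (bary_point Q - bary_point P))%C.
Proof. unfold bary_point, bary_comb; simpl. cring. Qed.

Lemma bary_point_mid P Q :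
  bary_point (bary_mid P Q) = (bary_point P + RtoC (1/2) * (bary_point Q - bary_point P))%C.
Proof. unfold bary_point, bary_mid; simpl. cring. Qed.

Lemma bary_point_dist P Q D : bary_close P Q D -> Cmod (bary_point P - bary_point Q)%C <= D * K.
Proof.
  unfold bary_close, bary_point, K. intros [H1 [H2 H3]].
  replace ((RtoC (bary1 P) * a + RtoC (bary2 P) * b + RtoC (bary3 P) * c)
           - (RtoC (bary1 Q) * a + RtoC (bary2 Q) * b + RtoC (bary3 Q) * c))%C
    with (RtoC (bary1 P - bary1 Q) * a + RtoC (bary2 P - bary2 Q) * b
          + RtoC (bary3 P - bary3 Q) * c)%C by cring.
  eapply Rle_trans; [apply Cmod_triangle|].
  eapply Rle_trans; [apply Rplus_le_compat_r, Cmod_triangle|].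
  rewrite !Cmod_RtoC_mult.
  pose proof (Cmod_ge_0 a). pose proof (Cmod_ge_0 b). pose proof (Cmod_ge_0 c).
  nra.
Qed.

Lemma continuous_on_segment_bary P Q :
  bary_in P -> bary_in Q -> continuous_on_segment h (bary_point P) (bary_point Q).
Proof.
  intros HP HQ s Hs. rewrite <- bary_point_comb.
  destruct (h_differentiable _ (bary_in_comb P Q s HP HQ Hs)) as [d Hd].
  exact (is_Cderive_continuous _ _ _ Hd).
Qed.

Definition tri_integral (t : tri) : C :=
  (line_integral h (bary_point (tri1 t)) (bary_point (tri2 t))
   + line_integral h (bary_point (tri2 t)) (bary_point (tri3 t))
   + line_integral h (bary_point (tri3 t)) (bary_point (tri1 t)))%C.

Lemma tri_integral_subdivide t : tri_in t ->
  tri_integral t = (tri_integral (tri_sub1 t) + tri_integral (tri_sub2 t)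
                    + tri_integral (tri_sub3 t) + tri_integral (tri_sub4 t))%C.
Proof.
  destruct t as [P Q R]. intros [HP [HQ HR]]. simpl in *.
  unfold tri_integral, tri_sub1, tri_sub2, tri_sub3, tri_sub4; simpl.
  assert (C1 := continuous_on_segment_bary _ _ (bary_in_mid _ _ HP HQ) (bary_in_mid _ _ HR HP)).
  assert (C2 := continuous_on_segment_bary _ _ (bary_in_mid _ _ HP HQ) (bary_in_mid _ _ HQ HR)).
  assert (C3 := continuous_on_segment_bary _ _ (bary_in_mid _ _ HQ HR) (bary_in_mid _ _ HR HP)).
  assert (S1 := continuous_on_segment_bary _ _ HP HQ).
  assert (S2 := continuous_on_segment_bary _ _ HQ HR).
  assert (S3 := continuous_on_segment_bary _ _ HR HP).
  rewrite !bary_point_mid in *.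
  rewrite (line_integral_swap _ _ _ C1), (line_integral_swap _ _ _ C2), (line_integral_swap _ _ _ C3).
  rewrite (line_integral_split _ _ _ (1/2) S1), (line_integral_split _ _ _ (1/2) S2),
    (line_integral_split _ _ _ (1/2) S3) by lra.
  ring.
Qed.

Definition goursat_step (t : tri) : tri :=
  if Rle_dec (Cmod (tri_integral t) / 4) (Cmod (tri_integral (tri_sub1 t))) then tri_sub1 t
  else if Rle_dec (Cmod (tri_integral t) / 4) (Cmod (tri_integral (tri_sub2 t))) then tri_sub2 t
  else if Rle_dec (Cmod (tri_integral t) / 4) (Cmod (tri_integral (tri_sub3 t))) then tri_sub3 t
  else tri_sub4 t.

Lemma goursat_step_cases t :
  goursat_step t = tri_sub1 t \/ goursat_step t = tri_sub2 t \/
  goursat_step t = tri_sub3 t \/ goursat_step t = tri_sub4 t.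
Proof. unfold goursat_step. repeat destruct Rle_dec; auto. Qed.

Lemma goursat_step_large t : tri_in t ->
  Cmod (tri_integral t) / 4 <= Cmod (tri_integral (goursat_step t)).
Proof.
  intros Ht. unfold goursat_step.
  destruct Rle_dec as [E1|E1]; [exact E1|]. destruct Rle_dec as [E2|E2]; [exact E2|].
  destruct Rle_dec as [E3|E3]; [exact E3|].
  apply Rnot_le_lt in E1, E2, E3. rewrite (tri_integral_subdivide t Ht) in *.
  set (t1 := tri_integral (tri_sub1 t)) in *. set (t2 := tri_integral (tri_sub2 t)) in *.
  set (t3 := tri_integral (tri_sub3 t)) in *. set (t4 := tri_integral (tri_sub4 t)) in *.
  pose proof (Cmod_triangle (t1 + t2 + t3) t4). pose proof (Cmod_triangle (t1 + t2) t3).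
  pose proof (Cmod_triangle t1 t2). lra.
Qed.

Lemma goursat_step_in t : tri_in t -> tri_in (goursat_step t).
Proof.
  intros [HP [HQ HR]].
  destruct (goursat_step_cases t) as [E|[E|[E|E]]]; rewrite E;
    refine (conj _ (conj _ _)); simpl; auto using bary_in_mid.
Qed.

Lemma goursat_step_small t D :
  tri_small t D -> tri_small (goursat_step t) (D / 2) /\ bary_close (tri1 (goursat_step t)) (tri1 t) D.
Proof.
  intros Ht. unfold tri_small in *. unfold_bary_close.
  destruct (goursat_step_cases t) as [E|[E|[E|E]]]; rewrite E;
    unfold tri_sub1, tri_sub2, tri_sub3, tri_sub4, bary_mid; simpl; repeat split; lra.
Qed.

Fixpoint goursat_seq (n : nat) : tri :=
  match n with O => tri_whole | S m => goursat_step (goursat_seq m) end.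

Lemma goursat_seq_in n : tri_in (goursat_seq n).
Proof.
  induction n as [|n IH]; simpl; [|now apply goursat_step_in].
  unfold tri_in, bary_in; simpl. lra.
Qed.

Lemma goursat_seq_small n : tri_small (goursat_seq n) ((1/2)^n).
Proof.
  induction n as [|n IH]; simpl.
  - unfold tri_small. unfold_bary_close. simpl. lra.
  - replace (1/2 * (1/2)^n) with ((1/2)^n / 2) by field. now apply goursat_step_small.
Qed.

Lemma goursat_seq_large n :
  Cmod (tri_integral tri_whole) * (1/4)^n <= Cmod (tri_integral (goursat_seq n)).
Proof.
  induction n as [|n IH]; simpl; [lra|].
  pose proof (goursat_step_large _ (goursat_seq_in n)). lra.
Qed.

Lemma goursat_seq_vertex_close n m :
  bary_close (tri1 (goursat_seq (n + m))) (tri1 (goursat_seq n)) (2 * (1/2)^n - 2 * (1/2)^(n + m)).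
Proof.
  induction m as [|m IH].
  - rewrite Nat.add_0_r. unfold_bary_close. lra.
  - replace (n + S m)%nat with (S (n + m)) by lia.
    replace (2 * (1/2)^n - 2 * (1/2)^(S (n + m)))
      with ((1/2)^(n + m) + (2 * (1/2)^n - 2 * (1/2)^(n + m))) by (simpl; field).
    apply (bary_close_trans _ (tri1 (goursat_seq (n + m)))); [|exact IH].
    apply goursat_step_small, goursat_seq_small.
Qed.

Lemma goursat_seq_limit :
  exists L, bary_in L /\ forall n, bary_close (tri1 (goursat_seq n)) L (2 * (1/2)^n).
Proof.
  assert (Hcauchy : forall (coord : bary -> R),
    (forall P Q D, bary_close P Q D -> Rabs (coord P - coord Q) <= D) ->
    exists l, forall n, Rabs (l - coord (tri1 (goursat_seq n))) <= 2 * (1/2)^n).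
  { intros coord Hcoord. apply geometric_cauchy_limit. intros n m.
    pose proof (half_pow_pos (n + m)).
    eapply Rle_trans; [apply Hcoord, goursat_seq_vertex_close | lra]. }
  destruct (Hcauchy bary1 ltac:(intros P Q D [H _]; exact H)) as [l1 H1].
  destruct (Hcauchy bary2 ltac:(intros P Q D [_ [H _]]; exact H)) as [l2 H2].
  destruct (Hcauchy bary3 ltac:(intros P Q D [_ [_ H]]; exact H)) as [l3 H3].
  exists (Bary l1 l2 l3). split.
  - assert (G : forall n, bary_in (tri1 (goursat_seq n))) by (intros n; apply goursat_seq_in).
    unfold bary_in in *; simpl.
    assert (Hsum : 0 <= l1 + l2 + l3 - 1 /\ 0 <= 1 - (l1 + l2 + l3)).
    { split; apply (Rle_0_of_geometric _ 6); intros n;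
        specialize (H1 n); specialize (H2 n); specialize (H3 n); specialize (G n);
        apply Rabs_le_between in H1, H2, H3; lra. }
    repeat split; try lra; apply (Rle_0_of_geometric _ 2); intros n;
      specialize (H1 n); specialize (H2 n); specialize (H3 n); specialize (G n);
      apply Rabs_le_between in H1, H2, H3; lra.
  - intros n. unfold bary_close; simpl.
    rewrite (Rabs_minus_sym _ l1), (Rabs_minus_sym _ l2), (Rabs_minus_sym _ l3). auto.
Qed.

Lemma line_integral_remainder_le p d eps del X Y L D :
  (forall w, Cmod (w - p)%C < del -> Cmod (h w - h p - d * (w - p))%C <= eps * Cmod (w - p)%C) ->
  p = bary_point L -> bary_in X -> bary_in Y ->
  bary_close X Y D -> bary_close X L (3 * D) -> 0 <= D -> 0 < eps -> 4 * D * K < del ->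
  Cmod (line_integral (fun w => h w - (h p - d * p + d * w))%C (bary_point X) (bary_point Y))
    <= 4 * eps * (D * K) * (D * K).
Proof.
  intros Hd Hp HX HY HXY HXL HD He Hdel.
  assert (HK : 0 <= K) by (unfold K; pose proof (Cmod_ge_0 a); pose proof (Cmod_ge_0 b); pose proof (Cmod_ge_0 c); lra).
  assert (Hedge : Cmod (bary_point Y - bary_point X)%C <= D * K) by (apply bary_point_dist, bary_close_sym; auto).
  replace (4 * eps * (D * K) * (D * K)) with ((D * K) * (eps * (4 * D * K))) by ring.
  eapply Rle_trans; [apply (line_integral_norm_le _ _ _ (eps * (4 * D * K)))|].
  - intros s Hs. apply Ccontinuous_minus; [apply continuous_on_segment_bary; auto | apply Ccontinuous_affine].
  - intros s Hs. rewrite <- bary_point_comb.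
    assert (Hc : bary_close (bary_comb X Y s) L (D + 3 * D))
      by (eapply bary_close_trans; [apply bary_close_comb; eauto | auto]).
    pose proof (bary_point_dist _ _ _ Hc) as Hw. rewrite <- Hp in Hw.
    set (w := bary_point (bary_comb X Y s)) in *.
    replace (h w - (h p - d * p + d * w))%C with (h w - h p - d * (w - p))%C by ring.
    eapply Rle_trans; [apply Hd; lra|].
    apply Rmult_le_compat_l; lra.
  - apply Rmult_le_compat_r; [|exact Hedge]. apply Rmult_le_pos; [lra|]. nra.
Qed.

Lemma tri_integral_le_near_diff_point L d eps del t D :
  (forall w, Cmod (w - bary_point L)%C < del ->
     Cmod (h w - h (bary_point L) - d * (w - bary_point L))%C <= eps * Cmod (w - bary_point L)%C) ->
  tri_in t -> tri_small t D -> bary_close (tri1 t) L (2 * D) -> 0 <= D -> 0 < eps -> 4 * D * K < del ->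
  Cmod (tri_integral t) <= 12 * eps * (D * K) * (D * K).
Proof.
  intros Hd [HP [HQ HS]] [SPQ [SQS SSP]] CPL HD He Hdel.
  destruct t as [P Q S]; simpl in *.
  set (p := bary_point L) in *.
  set (A := fun w => (h p - d * p + d * w)%C).
  assert (Hsplit : forall X Y, bary_in X -> bary_in Y ->
    line_integral h (bary_point X) (bary_point Y) =
    (line_integral (fun w => h w - A w)%C (bary_point X) (bary_point Y)
     + line_integral A (bary_point X) (bary_point Y))%C).
  { intros X Y HX HY. rewrite line_integral_minus; [ring | apply continuous_on_segment_bary; auto |].
    intros s _. apply Ccontinuous_affine. }
  assert (Hedge : forall X Y, bary_in X -> bary_in Y -> bary_close X Y D -> bary_close X L (3 * D) ->
    Cmod (line_integral (fun w => h w - A w)%C (bary_point X) (bary_point Y)) <= 4 * eps * (D * K) * (D * K)).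
  { intros X Y HX HY HXY HXL. exact (line_integral_remainder_le p d eps del X Y L D Hd eq_refl HX HY HXY HXL HD He Hdel). }
  assert (CQL : bary_close Q L (3 * D))
    by (replace (3 * D) with (D + 2 * D) by ring; eapply bary_close_trans; [apply bary_close_sym, SPQ | exact CPL]).
  assert (CSL : bary_close S L (3 * D))
    by (replace (3 * D) with (D + 2 * D) by ring; eapply bary_close_trans; [exact SSP | exact CPL]).
  assert (CPL' : bary_close P L (3 * D)) by (eapply bary_close_le; [exact CPL | lra]).
  unfold tri_integral; simpl.
  rewrite (Hsplit P Q), (Hsplit Q S), (Hsplit S P) by auto.
  pose proof (line_integral_affine_triangle (h p - d * p) d (bary_point P) (bary_point Q) (bary_point S)) as TA.
  fold A in TA.
  pose proof (Hedge P Q HP HQ SPQ CPL'). pose proof (Hedge Q S HQ HS SQS CQL).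
  pose proof (Hedge S P HS HP SSP CSL).
  set (r1 := line_integral (fun w => h w - A w)%C (bary_point P) (bary_point Q)) in *.
  set (r2 := line_integral (fun w => h w - A w)%C (bary_point Q) (bary_point S)) in *.
  set (r3 := line_integral (fun w => h w - A w)%C (bary_point S) (bary_point P)) in *.
  replace (r1 + line_integral A (bary_point P) (bary_point Q) + (r2 + line_integral A (bary_point Q) (bary_point S))
           + (r3 + line_integral A (bary_point S) (bary_point P)))%C
    with (r1 + r2 + r3 + (line_integral A (bary_point P) (bary_point Q) + line_integral A (bary_point Q) (bary_point S)
           + line_integral A (bary_point S) (bary_point P)))%C by ring.
  rewrite TA, Cplus_0_r.
  pose proof (Cmod_triangle (r1 + r2) r3). pose proof (Cmod_triangle r1 r2). lra.
Qed.

Lemma tri_integral_whole_zero : tri_integral tri_whole = 0%C.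
Proof.
  destruct goursat_seq_limit as [L [HL Hclose]].
  destruct (h_differentiable L HL) as [d Hd].
  assert (HK : 0 <= K) by (unfold K; pose proof (Cmod_ge_0 a); pose proof (Cmod_ge_0 b); pose proof (Cmod_ge_0 c); lra).
  apply Cmod_eq_0, Rle_antisym; [|apply Cmod_ge_0].
  apply (Rle_0_of_le_mult_eps _ (12 * K * K)); [nra|]. intros eps He.
  destruct (Hd eps He) as [del [Hdel Kd]].
  destruct (half_pow_lt (del / (4 * K + 1))) as [n Hn]; [apply Rdiv_lt_0_compat; lra|].
  specialize (Hn n (le_n n)).
  pose proof (half_pow_pos n) as HD.
  assert (HDK : 4 * (1/2)^n * K < del).
  { apply (Rmult_lt_compat_r (4 * K + 1)) in Hn; [|lra].
    unfold Rdiv in Hn. rewrite Rmult_assoc, Rinv_l in Hn by lra. nra. }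
  pose proof (tri_integral_le_near_diff_point L d eps del (goursat_seq n) ((1/2)^n) Kd
    (goursat_seq_in n) (goursat_seq_small n) (Hclose n) ltac:(lra) He HDK) as Hle.
  pose proof (goursat_seq_large n) as Hge.
  replace ((1/4)^n) with ((1/2)^n * (1/2)^n) in Hge by (rewrite <- Rpow_mult_distr; f_equal; field).
  apply (Rmult_le_reg_r ((1/2)^n * (1/2)^n)); nra.
Qed.

End Goursat.

Theorem goursat h a b c :
  (forall al be ga : R, 0 <= al -> 0 <= be -> 0 <= ga -> al + be + ga = 1 ->
     exists d, is_Cderive h (RtoC al * a + RtoC be * b + RtoC ga * c)%C d) ->
  (line_integral h a b + line_integral h b c + line_integral h c a)%C = 0%C.
Proof.
  intros H.
  pose proof (tri_integral_whole_zero h a b c ltac:(intros [x y z] (? & ? & ? & ?); apply H; auto)) as E.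
  unfold tri_integral, tri_whole in E; simpl in E.
  replace (bary_point a b c (Bary 1 0 0)) with a in E by (unfold bary_point; cring).
  replace (bary_point a b c (Bary 0 1 0)) with b in E by (unfold bary_point; cring).
  replace (bary_point a b c (Bary 0 0 1)) with c in E by (unfold bary_point; cring).
  exact E.
Qed.

(** * A primitive on the disk *)

Lemma Cmod_segment_lt (a b : C) (s M : R) : 0 <= s <= 1 -> Cmod a < M -> Cmod b < M ->
  Cmod (a + RtoC s * (b - a))%C < M.
Proof.
  intros Hs Ha Hb.
  replace (a + RtoC s * (b - a))%C with (RtoC (1 - s) * a + RtoC s * b)%C by cring.
  eapply Rle_lt_trans; [apply Cmod_triangle|]. rewrite !Cmod_RtoC_mult.
  rewrite (Rabs_pos_eq (1 - s)), (Rabs_pos_eq s) by lra.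
  destruct (Req_dec s 0) as [->|Hs0]; [lra|].
  assert (s * Cmod b < s * M) by (apply Rmult_lt_compat_l; lra).
  assert ((1 - s) * Cmod a <= (1 - s) * M) by (apply Rmult_le_compat_l; lra). lra.
Qed.

Lemma in_disk_0 : in_disk 0%C.
Proof. unfold in_disk. rewrite Cmod_0. lra. Qed.

Lemma in_disk_scale (ep : R) (z : C) : 0 <= ep <= 1 -> in_disk z -> in_disk (RtoC ep * z)%C.
Proof.
  unfold in_disk. intros Hep Hz. rewrite Cmod_RtoC_mult, Rabs_pos_eq by lra.
  pose proof (Cmod_ge_0 z). nra.
Qed.

Lemma continuous_on_segment_disk h a b :
  (forall z, in_disk z -> Ccontinuous h z) -> in_disk a -> in_disk b -> continuous_on_segment h a b.
Proof. intros H Ha Hb s Hs. apply H. now apply Cmod_segment_lt. Qed.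

(* [|z' - z| < |z|] keeps 0 off the segment [z, z'], so the triangle [0, z, z']
   meets 0 only at its vertex. *)
Lemma comb_in_punctured_disk (z z' : C) (u v : R) :
  in_disk z -> in_disk z' -> z <> 0%C -> Cmod (z' - z)%C < Cmod z ->
  0 <= u -> 0 <= v -> 0 < u + v <= 1 ->
  in_disk (RtoC u * z + RtoC v * z')%C /\ (RtoC u * z + RtoC v * z')%C <> 0%C.
Proof.
  unfold in_disk. intros Hz Hz' Hz0 Hzz' Hu Hv Huv.
  assert (Hm : 0 < Cmod z) by (apply Cmod_gt_0; auto).
  pose proof (Cmod_ge_0 z'). pose proof (Cmod_ge_0 (z' - z)%C).
  split.
  - eapply Rle_lt_trans; [apply Cmod_triangle|]. rewrite !Cmod_RtoC_mult, !Rabs_pos_eq by lra.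
    destruct (Rle_lt_or_eq_dec 0 u Hu) as [Hu0 | <-]; nra.
  - intros E.
    assert (E2 : (RtoC (u + v) * z)%C = (- (RtoC v * (z' - z)))%C).
    { replace (RtoC (u + v) * z)%C with ((RtoC u * z + RtoC v * z') - RtoC v * (z' - z))%C by cring.
      rewrite E. cring. }
    apply (f_equal Cmod) in E2. rewrite Cmod_opp, !Cmod_RtoC_mult, !Rabs_pos_eq in E2 by lra.
    nra.
Qed.

Lemma Ccontinuous_bounded_near h z : Ccontinuous h z ->
  exists rho M, 0 < rho /\ 0 <= M /\ forall w, Cmod (w - z)%C < rho -> Cmod (h w) <= M.
Proof.
  intros H. destruct (H 1 Rlt_0_1) as [rho [Hr K]].
  exists rho, (Cmod (h z) + 1). split; [exact Hr|]. split; [pose proof (Cmod_ge_0 (h z)); lra|].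
  intros w Hw. specialize (K w Hw). pose proof (Cmod_triangle (h w - h z)%C (h z)).
  replace (h w - h z + h z)%C with (h w) in H0 by ring. lra.
Qed.

Section Primitive.

Variable h : C -> C.
Hypothesis h_continuous : forall w, in_disk w -> Ccontinuous h w.
Hypothesis h_differentiable : forall w, in_disk w -> w <> 0%C -> exists d, is_Cderive h w d.

Let triangle_integral (x y z : C) : C :=
  (line_integral h x y + line_integral h y z + line_integral h z x)%C.

(* Goursat applies to the two triangles [ep z, z, z'] and [ep z, z', ep z'],
   which avoid the point 0 where [h] need not be differentiable. *)
Lemma triangle_integral_shrink (z z' : C) (ep : R) :
  in_disk z -> in_disk z' -> z <> 0%C -> Cmod (z' - z)%C < Cmod z -> 0 < ep <= 1 ->
  triangle_integral 0 z z' = triangle_integral 0 (RtoC ep * z) (RtoC ep * z').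
Proof.
  intros Hz Hz' Hz0 Hzz' Hep.
  assert (Hdiff : forall u v, 0 <= u -> 0 <= v -> 0 < u + v <= 1 ->
            exists d, is_Cderive h (RtoC u * z + RtoC v * z')%C d).
  { intros u v Hu Hv Huv.
    destruct (comb_in_punctured_disk z z' u v Hz Hz' Hz0 Hzz' Hu Hv Huv). auto. }
  assert (Dez : in_disk (RtoC ep * z)%C) by (apply in_disk_scale; auto; lra).
  assert (Dez' : in_disk (RtoC ep * z')%C) by (apply in_disk_scale; auto; lra).
  assert (T1 : (line_integral h (RtoC ep * z) z + line_integral h z z'
                + line_integral h z' (RtoC ep * z))%C = 0%C).
  { apply goursat. intros al be ga Hal Hbe Hga Hs.
    replace (RtoC al * (RtoC ep * z) + RtoC be * z + RtoC ga * z')%C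
      with (RtoC (al * ep + be) * z + RtoC ga * z')%C by cring.
    apply Hdiff; nra. }
  assert (T2 : (line_integral h (RtoC ep * z) z' + line_integral h z' (RtoC ep * z')
                + line_integral h (RtoC ep * z') (RtoC ep * z))%C = 0%C).
  { apply goursat. intros al be ga Hal Hbe Hga Hs.
    replace (RtoC al * (RtoC ep * z) + RtoC be * z' + RtoC ga * (RtoC ep * z'))%C
      with (RtoC (al * ep) * z + RtoC (be + ga * ep) * z')%C by cring.
    apply Hdiff; nra. }
  assert (S1 := line_integral_split h 0 z ep (continuous_on_segment_disk h 0 z h_continuous in_disk_0 Hz) ltac:(lra)).
  assert (S2 := line_integral_split h z' 0 (1 - ep) (continuous_on_segment_disk h z' 0 h_continuous Hz' in_disk_0) ltac:(lra)).
  replace (0 + RtoC ep * (z - 0))%C with (RtoC ep * z)%C in S1 by cring.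
  replace (z' + RtoC (1 - ep) * (0 - z'))%C with (RtoC ep * z')%C in S2 by cring.
  rewrite (line_integral_swap h _ _ (continuous_on_segment_disk h _ _ h_continuous Dez Hz')) in T1.
  rewrite (line_integral_swap h _ _ (continuous_on_segment_disk h _ _ h_continuous Dez Dez')) in T2.
  unfold triangle_integral. rewrite S1, S2.
  apply Ceq_minus.
  match goal with T1 : ?t1 = _, T2 : ?t2 = _ |- (?l - ?r)%C = _ =>
    replace (l - r)%C with (t1 + t2)%C by ring end.
  rewrite T1, T2. ring.
Qed.

Lemma line_integral_le_near_0 (rho M r : R) (x y : C) :
  (forall w, Cmod (w - 0)%C < rho -> Cmod (h w) <= M) -> 0 <= M -> r < rho ->
  in_disk x -> in_disk y -> Cmod x <= r -> Cmod y <= r -> Cmod (y - x)%C <= r ->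
  Cmod (line_integral h x y) <= r * M.
Proof.
  intros HhM HM Hr Dx Dy Hx Hy Hxy.
  eapply Rle_trans; [apply (line_integral_norm_le h x y M)|].
  - now apply continuous_on_segment_disk.
  - intros s Hs. apply HhM. rewrite Cminus_0_r. apply Cmod_segment_lt; auto; lra.
  - apply Rmult_le_compat_r; [exact HM | exact Hxy].
Qed.

Lemma triangle_integral_zero (z z' : C) :
  in_disk z -> in_disk z' -> z <> 0%C -> Cmod (z' - z)%C < Cmod z -> triangle_integral 0 z z' = 0%C.
Proof.
  intros Hz Hz' Hz0 Hzz'.
  destruct (Ccontinuous_bounded_near h 0 (h_continuous 0 in_disk_0)) as [rho [M [Hrho [HM HhM]]]].
  set (Kz := Cmod z + Cmod z' + 1).
  pose proof (Cmod_ge_0 z). pose proof (Cmod_ge_0 z').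
  assert (HKz : 0 < Kz) by (unfold Kz; lra).
  apply Cmod_eq_0, Rle_antisym; [|apply Cmod_ge_0].
  apply (Rle_0_of_le_mult_eps _ (3 * Kz * M)); [nra|]. intros eps He.
  set (ep := Rmin eps (Rmin 1 (rho / (2 * Kz)))).
  assert (Hep : 0 < ep <= 1).
  { split; [apply Rmin_pos; [lra | apply Rmin_pos; [lra | apply Rdiv_lt_0_compat; lra]]|].
    eapply Rle_trans; [apply Rmin_r | apply Rmin_l]. }
  assert (Hep_eps : ep <= eps) by apply Rmin_l.
  assert (Hep_rho : ep * Kz < rho).
  { assert (H1 : ep <= rho / (2 * Kz)) by (eapply Rle_trans; [apply Rmin_r | apply Rmin_r]).
    apply (Rmult_le_compat_r Kz) in H1; [|lra].
    replace (rho / (2 * Kz) * Kz) with (rho / 2) in H1 by (field; lra). lra. }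
  pose proof (line_integral_le_near_0 rho M (ep * Kz)) as Hsmall.
  assert (Dez : in_disk (RtoC ep * z)%C) by (apply in_disk_scale; auto; lra).
  assert (Dez' : in_disk (RtoC ep * z')%C) by (apply in_disk_scale; auto; lra).
  assert (Hmz : Cmod (RtoC ep * z)%C <= ep * Kz)
    by (rewrite Cmod_RtoC_mult, Rabs_pos_eq by lra; unfold Kz; nra).
  assert (Hmz' : Cmod (RtoC ep * z')%C <= ep * Kz)
    by (rewrite Cmod_RtoC_mult, Rabs_pos_eq by lra; unfold Kz; nra).
  assert (Hm0 : Cmod 0%C <= ep * Kz) by (rewrite Cmod_0; nra).
  rewrite (triangle_integral_shrink z z' ep) by auto. unfold triangle_integral.
  assert (Cmod (line_integral h 0 (RtoC ep * z)) <= ep * Kz * M)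
    by (apply Hsmall; auto using in_disk_0; rewrite Cminus_0_r; auto).
  assert (Cmod (line_integral h (RtoC ep * z) (RtoC ep * z')) <= ep * Kz * M).
  { apply Hsmall; auto. replace (RtoC ep * z' - RtoC ep * z)%C with (RtoC ep * (z' - z))%C by ring.
    rewrite Cmod_RtoC_mult, Rabs_pos_eq by lra. unfold Kz. nra. }
  assert (Cmod (line_integral h (RtoC ep * z') 0) <= ep * Kz * M)
    by (apply Hsmall; auto using in_disk_0; rewrite Cminus_0_l, Cmod_opp; auto).
  pose proof (Cmod_triangle (line_integral h 0 (RtoC ep * z) + line_integral h (RtoC ep * z) (RtoC ep * z'))
                            (line_integral h (RtoC ep * z') 0)).
  pose proof (Cmod_triangle (line_integral h 0 (RtoC ep * z)) (line_integral h (RtoC ep * z) (RtoC ep * z'))).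
  assert (ep * Kz * M <= eps * Kz * M) by (apply Rmult_le_compat_r; [lra | nra]).
  lra.
Qed.

Lemma line_integral_from_0_increment (z : C) : in_disk z ->
  exists del, 0 < del /\ forall w, Cmod (w - z)%C < del ->
    in_disk w /\ (line_integral h 0 w - line_integral h 0 z)%C = line_integral h z w.
Proof.
  intros Hz. destruct (Ceq_dec z 0) as [->|Hz0].
  - exists 1. split; [lra|]. intros w Hw. rewrite Cminus_0_r in Hw.
    split; [exact Hw|]. rewrite line_integral_point. ring.
  - assert (Hm : 0 < Cmod z) by (apply Cmod_gt_0; auto).
    exists (Rmin (Cmod z) (1 - Cmod z)). split; [apply Rmin_pos; unfold in_disk in Hz; lra|].
    intros w Hw.
    assert (Hw1 : Cmod (w - z)%C < Cmod z) by (eapply Rlt_le_trans; [exact Hw | apply Rmin_l]).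
    assert (Dw : in_disk w).
    { assert (Cmod (w - z)%C < 1 - Cmod z) by (eapply Rlt_le_trans; [exact Hw | apply Rmin_r]).
      unfold in_disk. pose proof (Cmod_triangle (w - z) z). replace (w - z + z)%C with w in H0 by ring. lra. }
    split; [exact Dw|].
    pose proof (triangle_integral_zero z w Hz Dw Hz0 Hw1) as T. unfold triangle_integral in T.
    rewrite (line_integral_swap h 0 w (continuous_on_segment_disk h _ _ h_continuous in_disk_0 Dw)) in T.
    apply Ceq_minus in T. apply Ceq_minus. rewrite <- T. ring.
Qed.

Theorem line_integral_from_0_primitive (z : C) : in_disk z ->
  is_Cderive (fun w => line_integral h 0 w) z (h z).
Proof.
  intros Hz eps Heps.
  destruct (h_continuous z Hz eps Heps) as [del1 [Hdel1 K1]].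
  destruct (line_integral_from_0_increment z Hz) as [del2 [Hdel2 K2]].
  exists (Rmin del1 del2). split; [apply Rmin_pos; auto|]. intros w Hw.
  destruct (K2 w (Rlt_le_trans _ _ _ Hw (Rmin_r _ _))) as [Dw ->].
  assert (Hseg : continuous_on_segment h z w) by (now apply continuous_on_segment_disk).
  rewrite <- line_integral_const, <- line_integral_minus by (auto; intros s _; apply Ccontinuous_const).
  rewrite Rmult_comm. apply line_integral_norm_le.
  - intros s Hs. apply Ccontinuous_minus; [apply Hseg; auto | apply Ccontinuous_const].
  - intros s Hs. left. apply K1.
    replace (z + RtoC s * (w - z) - z)%C with (RtoC s * (w - z))%C by ring.
    rewrite Cmod_RtoC_mult, Rabs_pos_eq by lra.
    pose proof (Cmod_ge_0 (w - z)%C). pose proof (Rmin_l del1 del2). nra.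
Qed.

End Primitive.

(** * Holomorphy of the principal power (1 - w)^beta *)

Lemma differentiable_pt_lim_eq f x y a b a' b' :
  differentiable_pt_lim f x y a b -> a = a' -> b = b' -> differentiable_pt_lim f x y a' b'.
Proof. now intros H <- <-. Qed.

Lemma differentiable_pt_lim_fst x y : differentiable_pt_lim (fun u _ => u) x y 1 0.
Proof. apply (differentiable_pt_lim_proj1_0 (fun u => u)), derivable_pt_lim_id. Qed.

Lemma differentiable_pt_lim_snd x y : differentiable_pt_lim (fun _ v => v) x y 0 1.
Proof.
  intros eps. exists (mkposreal 1 Rlt_0_1). intros u v _ _.
  replace (v - y - (0 * (u - x) + 1 * (v - y))) with 0 by ring. rewrite Rabs_R0.
  apply Rmult_le_pos; [left; apply cond_pos | eapply Rle_trans; [apply Rabs_pos | apply Rmax_l]].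
Qed.

Lemma differentiable_pt_lim_plus f g x y fx fy gx gy :
  differentiable_pt_lim f x y fx fy -> differentiable_pt_lim g x y gx gy ->
  differentiable_pt_lim (fun u v => f u v + g u v) x y (fx + gx) (fy + gy).
Proof.
  intros Hf Hg.
  assert (Hplus : differentiable_pt_lim Rplus (f x y) (g x y) 1 1).
  { apply filterdiff_differentiable_pt_lim. eapply filterdiff_ext_lin.
    - apply (@filterdiff_plus R_AbsRing R_NormedModule).
    - intros [u v]. simpl. unfold plus; simpl. ring. }
  eapply differentiable_pt_lim_eq; [exact (differentiable_pt_lim_comp _ f g x y _ _ _ _ _ _ Hplus Hf Hg) | ring | ring].
Qed.

Lemma differentiable_pt_lim_mult f g x y fx fy gx gy :
  differentiable_pt_lim f x y fx fy -> differentiable_pt_lim g x y gx gy ->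
  differentiable_pt_lim (fun u v => f u v * g u v) x y (g x y * fx + f x y * gx) (g x y * fy + f x y * gy).
Proof.
  intros Hf Hg.
  assert (Hmult : differentiable_pt_lim Rmult (f x y) (g x y) (g x y) (f x y)).
  { apply filterdiff_differentiable_pt_lim. eapply filterdiff_ext_lin.
    - apply (@filterdiff_mult R_AbsRing (locally (f x y, g x y)) _ (f x y, g x y)); [intros P HP; exact HP|].
      intros; apply Rmult_comm.
    - intros [u v]. simpl. unfold plus, mult; simpl. ring. }
  exact (differentiable_pt_lim_comp _ f g x y _ _ _ _ _ _ Hmult Hf Hg).
Qed.

Lemma differentiable_pt_lim_comp_1d (phi : R -> R) f x y d fx fy :
  derivable_pt_lim phi (f x y) d -> differentiable_pt_lim f x y fx fy ->
  differentiable_pt_lim (fun u v => phi (f u v)) x y (d * fx) (d * fy).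
Proof.
  intros Hp Hf.
  eapply differentiable_pt_lim_eq;
    [ exact (differentiable_pt_lim_comp (fun a _ => phi a) f f x y _ _ _ _ _ _
             (differentiable_pt_lim_proj1_0 phi _ _ _ Hp) Hf Hf) | ring | ring ].
Qed.

Open Scope C_scope.

Lemma is_Cderive_Cauchy_Riemann (F : C -> C) x y ux uy vx vy :
  differentiable_pt_lim (fun u v => fst (F (u, v))) x y ux uy ->
  differentiable_pt_lim (fun u v => snd (F (u, v))) x y vx vy ->
  vy = ux -> uy = (- vx)%R -> is_Cderive F (x, y) (ux, vx).
Proof.
  intros HU HV E1 E2 eps Heps.
  destruct (HU (mkposreal (eps / 2) ltac:(lra))) as [d1 K1].
  destruct (HV (mkposreal (eps / 2) ltac:(lra))) as [d2 K2].
  exists (Rmin d1 d2). split; [apply Rmin_pos; apply cond_pos|].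
  intros [u v] Hw.
  pose proof (Rmax_Cmod ((u, v) - (x, y))) as Hm. simpl in Hm.
  replace (u + - x)%R with (u - x)%R in Hm by ring. replace (v + - y)%R with (v - y)%R in Hm by ring.
  pose proof (Rmin_l d1 d2). pose proof (Rmin_r d1 d2).
  pose proof (Rmax_l (Rabs (u - x)) (Rabs (v - y))). pose proof (Rmax_r (Rabs (u - x)) (Rabs (v - y))).
  specialize (K1 u v ltac:(lra) ltac:(lra)). specialize (K2 u v ltac:(lra) ltac:(lra)). simpl in K1, K2.
  eapply Rle_trans; [apply Cmod_le_Rabs_sum|]. simpl.
  replace (fst (F (u, v)) + - fst (F (x, y)) + - (ux * (u + - x) - vx * (v + - y)))%R
    with (fst (F (u, v)) - fst (F (x, y)) - (ux * (u - x) + uy * (v - y)))%R by (rewrite E2; ring).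
  replace (snd (F (u, v)) + - snd (F (x, y)) + - (ux * (v + - y) + vx * (u + - x)))%R
    with (snd (F (u, v)) - snd (F (x, y)) - (vx * (u - x) + vy * (v - y)))%R by (rewrite E1; ring).
  pose proof (Cmod_ge_0 ((u, v) - (x, y))).
  assert (eps / 2 * Rmax (Rabs (u - x)) (Rabs (v - y)) <= eps / 2 * Cmod ((u, v) - (x, y)))%R
    by (apply Rmult_le_compat_l; lra).
  simpl in K1, K2. lra.
Qed.

Open Scope R_scope.

Definition sqmod_1m (u v : R) : R := (1 - u) * (1 - u) + v * v.

Definition tan_arg_1m (u v : R) : R := - v / (1 - u).

Definition cpow_1m (be : R) (w : C) : C := cpow_principal (1 - w)%C be.

(* For [u < 1] the point [1 - (u + iv)] lies in the right half-plane, where the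
   principal argument is [atan (tan_arg_1m u v)]. *)
Lemma cpow_1m_polar be u v : u < 1 ->
  cpow_1m be (u, v) =
  (exp (be * ln (sqrt (sqmod_1m u v))) * cos (be * atan (tan_arg_1m u v)),
   exp (be * ln (sqrt (sqmod_1m u v))) * sin (be * atan (tan_arg_1m u v))).
Proof.
  intros Hu. unfold cpow_1m, cpow_principal, principal_arg, sqmod_1m, tan_arg_1m, Cmod. simpl.
  destruct (Rlt_dec 0 (1 + - u)) as [_|F]; [|lra].
  replace ((0 + - v) / (1 + - u)) with (- v / (1 - u)) by (field; lra).
  replace ((1 + - u) * ((1 + - u) * 1) + (0 + - v) * ((0 + - v) * 1)) with ((1 - u) * (1 - u) + v * v)
    by ring.
  reflexivity.
Qed.

Lemma differentiable_pt_lim_sqmod_1m x y :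
  differentiable_pt_lim sqmod_1m x y (-2 * (1 - x)) (2 * y).
Proof.
  unfold sqmod_1m. eapply differentiable_pt_lim_eq; [apply differentiable_pt_lim_plus | |].
  - apply (differentiable_pt_lim_comp_1d (fun t => (1 - t) * (1 - t)) (fun u _ => u));
      [apply is_derive_Reals; auto_derive; trivial | apply differentiable_pt_lim_fst].
  - apply (differentiable_pt_lim_comp_1d (fun t => t * t) (fun _ v => v));
      [apply is_derive_Reals; auto_derive; trivial | apply differentiable_pt_lim_snd].
  - ring.
  - ring.
Qed.

Lemma differentiable_pt_lim_tan_arg_1m x y : x < 1 ->
  differentiable_pt_lim tan_arg_1m x y (- y / ((1 - x) * (1 - x))) (- / (1 - x)).
Proof.
  intros Hx. unfold tan_arg_1m.
  eapply differentiable_pt_lim_eq; [apply differentiable_pt_lim_mult | |].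
  - apply (differentiable_pt_lim_comp_1d (fun t => - t) (fun _ v => v));
      [apply is_derive_Reals; auto_derive; trivial | apply differentiable_pt_lim_snd].
  - apply (differentiable_pt_lim_comp_1d (fun t => / (1 - t)) (fun u _ => u)).
    + apply is_derive_Reals. auto_derive; [lra | reflexivity].
    + apply differentiable_pt_lim_fst.
  - cbv beta. field. lra.
  - cbv beta. field. lra.
Qed.

Lemma sqmod_1m_pos x y : x < 1 -> 0 < sqmod_1m x y.
Proof. intros. unfold sqmod_1m. nra. Qed.

Lemma differentiable_pt_lim_arg_1m x y : x < 1 ->
  differentiable_pt_lim (fun u v => atan (tan_arg_1m u v)) x y
    (- y / sqmod_1m x y) (- (1 - x) / sqmod_1m x y).
Proof.
  intros Hx. pose proof (sqmod_1m_pos x y Hx).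
  eapply differentiable_pt_lim_eq;
    [apply (differentiable_pt_lim_comp_1d atan); [apply derivable_pt_lim_atan | apply differentiable_pt_lim_tan_arg_1m, Hx] | |];
    unfold tan_arg_1m, sqmod_1m in *;
    replace (1 + (- y / (1 - x)) ^ 2) with (((1 - x) * (1 - x) + y * y) / ((1 - x) * (1 - x)))
      by (field; lra);
    field; lra.
Qed.

Lemma differentiable_pt_lim_modpow_1m be x y : x < 1 ->
  differentiable_pt_lim (fun u v => exp (be * ln (sqrt (sqmod_1m u v)))) x y
    (- exp (be * ln (sqrt (sqmod_1m x y))) * be * (1 - x) / sqmod_1m x y)
    (exp (be * ln (sqrt (sqmod_1m x y))) * be * y / sqmod_1m x y).
Proof.
  intros Hx. pose proof (sqmod_1m_pos x y Hx) as HA.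
  pose proof (sqrt_lt_R0 _ HA). pose proof (sqrt_sqrt _ (Rlt_le _ _ HA)).
  eapply differentiable_pt_lim_eq;
    [apply (differentiable_pt_lim_comp_1d (fun a => exp (be * ln (sqrt a))));
       [apply is_derive_Reals; auto_derive; [repeat split; auto | reflexivity]
       | apply differentiable_pt_lim_sqmod_1m] | |];
    cbv beta; set (r := sqrt (sqmod_1m x y)) in *; rewrite <- H0; field; lra.
Qed.

Lemma is_Cderive_cpow_1m be w : Re w < 1 ->
  is_Cderive (cpow_1m be) w (RtoC (- be) * cpow_1m be w / (1 - w))%C.
Proof.
  destruct w as [x y]. unfold Re; simpl. intros Hx.
  pose proof (sqmod_1m_pos x y Hx) as HA.
  set (A := sqmod_1m x y) in *.
  set (E := exp (be * ln (sqrt A))).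
  set (th := be * atan (tan_arg_1m x y)).
  assert (Hloc : locally_2d (fun u v => u < 1) x y).
  { exists (mkposreal (1 - x) ltac:(lra)). intros u v Hu _. simpl in Hu.
    apply Rabs_lt_between in Hu. lra. }
  assert (Hd : (RtoC (- be) * cpow_1m be (x, y) / (1 - (x, y)))%C =
    (- E * be * ((1 - x) * cos th - y * sin th) / A, - E * be * ((1 - x) * sin th + y * cos th) / A)).
  { rewrite cpow_1m_polar by exact Hx. fold A E th.
    unfold A, sqmod_1m in *. unfold Cdiv, Cinv, Cmult, Cminus, Cplus, Copp, RtoC. simpl.
    apply injective_projections; simpl; field; nra. }
  rewrite Hd.
  apply is_Cderive_Cauchy_Riemann with
    (uy := E * be * (y * cos th + (1 - x) * sin th) / A)
    (vy := - E * be * ((1 - x) * cos th - y * sin th) / A); [| | reflexivity | field; lra].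
  - eapply differentiable_pt_lim_ext.
    { eapply locally_2d_impl; [| exact Hloc]. apply locally_2d_forall.
      intros u v Hu. rewrite cpow_1m_polar by exact Hu. reflexivity. }
    eapply differentiable_pt_lim_eq;
      [apply differentiable_pt_lim_mult;
         [apply differentiable_pt_lim_modpow_1m, Hx
         | apply (differentiable_pt_lim_comp_1d (fun t => cos (be * t)));
             [apply is_derive_Reals; auto_derive; [trivial | reflexivity] | apply differentiable_pt_lim_arg_1m, Hx]]
      | |]; cbv beta; fold A E th; field; lra.
  - eapply differentiable_pt_lim_ext.
    { eapply locally_2d_impl; [| exact Hloc]. apply locally_2d_forall.
      intros u v Hu. rewrite cpow_1m_polar by exact Hu. reflexivity. }
    eapply differentiable_pt_lim_eq;
      [apply differentiable_pt_lim_mult;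
         [apply differentiable_pt_lim_modpow_1m, Hx
         | apply (differentiable_pt_lim_comp_1d (fun t => sin (be * t)));
             [apply is_derive_Reals; auto_derive; [trivial | reflexivity] | apply differentiable_pt_lim_arg_1m, Hx]]
      | |]; cbv beta; fold A E th; field; lra.
Qed.

Lemma cpow_1m_neq_0 be w : cpow_1m be w <> 0%C.
Proof.
  unfold cpow_1m, cpow_principal. intros E. injection E as E1 E2.
  pose proof (exp_pos (be * ln (Cmod (1 - w)))).
  pose proof (sin2_cos2 (be * principal_arg (1 - w))). unfold Rsqr in *.
  apply Rmult_integral in E1. apply Rmult_integral in E2. nra.
Qed.

Lemma cpow_1m_0 be : cpow_1m be 0%C = 1%C.
Proof.
  unfold cpow_1m, cpow_principal, principal_arg.
  replace (1 - 0)%C with (RtoC 1) by ring. rewrite Cmod_1, ln_1. simpl.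
  destruct (Rlt_dec 0 1) as [_|F]; [|lra].
  replace (0 / 1) with 0 by field. rewrite atan_0, !Rmult_0_r, exp_0, cos_0, sin_0.
  cring.
Qed.

(** * A minimum principle for the real part *)

Lemma Ccontinuous_Re_near q z eps : Ccontinuous q z -> 0 < eps ->
  exists del, 0 < del /\ forall w, Cmod (w - z)%C < del -> Rabs (Re (q w) - Re (q z)) < eps.
Proof.
  intros Hc He. destruct (Hc eps He) as [del [Hd K]]. exists del. split; [exact Hd|].
  intros w Hw. eapply Rle_lt_trans; [| exact (K w Hw)].
  replace (Re (q w) - Re (q z)) with (Re (q w - q z)%C) by (unfold Re; simpl; ring).
  apply re_le_Cmod.
Qed.

Lemma Re_deriv_dir_nonneg q z0 d v u s0 :
  is_Cderive q z0 d -> Re (q z0) = 0 -> 0 < s0 ->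
  (forall s, 0 < s < s0 -> 0 <= Re (q (z0 + RtoC s * v + RtoC (s * s) * u)%C)) ->
  0 <= Re (d * v)%C.
Proof.
  intros Hd Hq0 Hs0 Hcurve. apply Rnot_lt_le. intros Hneg.
  set (m := - Re (d * v)%C). set (Nv := Cmod v + Cmod u + 1). set (Ru := Rabs (Re (d * u)%C) + 1).
  pose proof (Cmod_ge_0 v). pose proof (Cmod_ge_0 u). pose proof (Rabs_pos (Re (d * u)%C)).
  assert (Hm : 0 < m) by (unfold m; lra).
  assert (HNv : 0 < Nv) by (unfold Nv; lra). assert (HRu : 0 < Ru) by (unfold Ru; lra).
  destruct (Hd (m / (4 * Nv))) as [del [Hdel K]]; [apply Rdiv_lt_0_compat; lra|].
  set (s := Rmin (Rmin (s0 / 2) 1) (Rmin (del / (2 * Nv)) (m / (4 * Ru)))).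
  assert (Hs : 0 < s) by (repeat apply Rmin_pos; try apply Rdiv_lt_0_compat; lra).
  assert (Hss0 : s < s0) by (eapply Rle_lt_trans; [eapply Rle_trans; [apply Rmin_l | apply Rmin_l] | lra]).
  assert (Hs1 : s <= 1) by (eapply Rle_trans; [apply Rmin_l | apply Rmin_r]).
  assert (Hsdel : s * Nv < del).
  { assert (s <= del / (2 * Nv)) by (eapply Rle_trans; [apply Rmin_r | apply Rmin_l]).
    apply (Rmult_le_compat_r Nv) in H2; [|lra].
    replace (del / (2 * Nv) * Nv) with (del / 2) in H2 by (field; lra). lra. }
  assert (HsRu : s * Ru <= m / 4).
  { assert (s <= m / (4 * Ru)) by (eapply Rle_trans; [apply Rmin_r | apply Rmin_r]).
    apply (Rmult_le_compat_r Ru) in H2; [|lra].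
    replace (m / (4 * Ru) * Ru) with (m / 4) in H2 by (field; lra). lra. }
  set (w := (z0 + RtoC s * v + RtoC (s * s) * u)%C).
  assert (Hwz : Cmod (w - z0)%C <= s * Nv).
  { unfold w. replace (z0 + RtoC s * v + RtoC (s * s) * u - z0)%C with (RtoC s * v + RtoC (s * s) * u)%C by ring.
    eapply Rle_trans; [apply Cmod_triangle|]. rewrite !Cmod_RtoC_mult, !Rabs_pos_eq by nra.
    assert (0 <= (1 - s) * (s * Cmod u)) by (apply Rmult_le_pos; nra). unfold Nv. nra. }
  specialize (K w ltac:(lra)). specialize (Hcurve s (conj Hs Hss0)). fold w in Hcurve.
  pose proof (Re_le_Cmod (q w - q z0 - d * (w - z0))%C) as HR.
  replace (Re (q w - q z0 - d * (w - z0))%C) with (Re (q w) - Re (q z0) + s * m - s * s * Re (d * u)%C) in HR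
    by (unfold w, m, Re; simpl; ring).
  assert (m / (4 * Nv) * Cmod (w - z0)%C <= s * m / 4).
  { apply (Rmult_le_compat_l (m / (4 * Nv))) in Hwz; [|apply Rlt_le, Rdiv_lt_0_compat; lra].
    replace (m / (4 * Nv) * (s * Nv)) with (s * m / 4) in Hwz by (field; lra). exact Hwz. }
  assert (s * s * Re (d * u)%C <= s * (m / 4)).
  { pose proof (Rle_abs (Re (d * u)%C)). unfold Ru in HsRu. nra. }
  nra.
Qed.

Lemma Cmod_rotation_le (t : R) : t * t <= 1 -> Cmod (1 - t * t, t) <= 1.
Proof.
  intros Ht. unfold Cmod; simpl. apply (Rle_trans _ (sqrt 1)); [apply sqrt_le_1_alt | rewrite sqrt_1; lra].
  assert (t * t * (t * t) <= t * t * 1) by (apply Rmult_le_compat_l; nra). nra.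
Qed.

(* The radial direction [- z0] gives the sign, the tangential directions
   [+- i z0] (along the curves [z0 (1 - s^2 +- i s)], which stay in the disk)
   the vanishing imaginary part. *)
Lemma boundary_minimum_deriv q z0 d :
  is_Cderive q z0 d -> Re (q z0) = 0 ->
  (forall w, Cmod w <= Cmod z0 -> 0 <= Re (q w)) ->
  Re (z0 * d)%C <= 0 /\ Im (z0 * d)%C = 0.
Proof.
  intros Hd Hq0 Hmin.
  assert (Hcurve : forall v u, (forall s, 0 < s < 1 -> Cmod (z0 + RtoC s * v + RtoC (s * s) * u)%C <= Cmod z0) ->
            0 <= Re (d * v)%C).
  { intros v u Hvu. apply (Re_deriv_dir_nonneg q z0 d v u 1 Hd Hq0 Rlt_0_1).
    intros s Hs. apply Hmin, Hvu, Hs. }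
  assert (Hrad : 0 <= Re (d * - z0)%C).
  { apply (Hcurve _ 0%C). intros s Hs.
    replace (z0 + RtoC s * - z0 + RtoC (s * s) * 0)%C with (RtoC (1 - s) * z0)%C by cring.
    rewrite Cmod_RtoC_mult, Rabs_pos_eq by lra. pose proof (Cmod_ge_0 z0). nra. }
  assert (Htan : forall sg : R, sg * sg = 1 -> 0 <= Re (d * (RtoC sg * Ci * z0))%C).
  { intros sg Hsg. apply (Hcurve _ (- z0)%C). intros s Hs.
    replace (z0 + RtoC s * (RtoC sg * Ci * z0) + RtoC (s * s) * - z0)%C
      with (z0 * ((1 - (sg * s) * (sg * s))%R, (sg * s)%R))%C
      by (apply injective_projections; simpl; replace (sg * s * (sg * s)) with (s * s) by nra; ring).
    rewrite Cmod_mult. pose proof (Cmod_ge_0 z0).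
    assert (Cmod (1 - (sg * s) * (sg * s), sg * s) <= 1) by (apply Cmod_rotation_le; nra).
    nra. }
  pose proof (Htan 1 ltac:(ring)) as H1. pose proof (Htan (-1) ltac:(ring)) as H2.
  unfold Re, Im in *. simpl in *. split; nra.
Qed.

Lemma Re_nonneg_closed_disk q r : 0 < r < 1 -> (forall z, in_disk z -> Ccontinuous q z) ->
  (forall z, Cmod z < r -> 0 < Re (q z)) -> forall z, Cmod z <= r -> 0 <= Re (q z).
Proof.
  intros Hr Hc Hpos z Hz.
  destruct (Rle_lt_or_eq_dec _ _ Hz) as [Hlt | Heq]; [left; apply Hpos, Hlt|].
  apply Rnot_lt_le. intros Hneg.
  destruct (Ccontinuous_Re_near q z (- Re (q z)) (Hc z ltac:(unfold in_disk; lra)) ltac:(lra))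
    as [del [Hdel K]].
  set (eta := Rmin (1/2) (del / (2 * r))).
  assert (Heta : 0 < eta) by (apply Rmin_pos; [lra | apply Rdiv_lt_0_compat; lra]).
  assert (Heta1 : eta <= 1/2) by apply Rmin_l.
  assert (Heta2 : eta * r <= del / 2).
  { assert (eta <= del / (2 * r)) by apply Rmin_r.
    apply (Rmult_le_compat_r r) in H; [|lra].
    replace (del / (2 * r) * r) with (del / 2) in H by (field; lra). exact H. }
  set (u := (RtoC (1 - eta) * z)%C).
  assert (Hu : Cmod (u - z)%C < del).
  { unfold u. replace (RtoC (1 - eta) * z - z)%C with (RtoC (- eta) * z)%C by cring.
    rewrite Cmod_RtoC_mult, Rabs_left, Heq by lra. lra. }
  specialize (K u Hu). apply Rabs_lt_between in K.
  assert (Cmod u < r) by (unfold u; rewrite Cmod_RtoC_mult, Rabs_pos_eq, Heq by lra; nra).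
  specialize (Hpos u H). lra.
Qed.

Lemma Re_pos_closed_disk_extends (q : C -> C) (r0 : R) : 0 <= r0 < 1 ->
  (forall z, in_disk z -> Ccontinuous q z) ->
  (forall z, Cmod z <= r0 -> 0 < Re (q z)) ->
  exists d, 0 < d /\ forall z, Cmod z < r0 + d -> in_disk z -> 0 < Re (q z).
Proof.
  intros Hr Hc Hpos.
  (* Lebesgue-number argument on [-1, 1]^2 for a gauge that is a radius of
     positivity of [Re q] inside the closed disk and a quarter of the distance
     to the disk outside. *)
  assert (Ex : forall p : C, exists del : posreal,
     (Cmod p <= r0 -> forall w, Cmod (w - p)%C < 2 * del -> 0 < Re (q w)) /\
     (r0 < Cmod p -> 4 * del = Cmod p - r0)).
  { intros [u v]. destruct (Rle_lt_dec (Cmod (u, v)) r0) as [H|H].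
    - destruct (Ccontinuous_Re_near q (u, v) (Re (q (u, v))) (Hc (u, v) ltac:(unfold in_disk; lra))
                  (Hpos (u, v) H)) as [del [Hd K]].
      exists (mkposreal (del / 2) ltac:(lra)). simpl. split; [|lra].
      intros _ w Hw. specialize (K w ltac:(lra)). apply Rabs_lt_between in K. lra.
    - exists (mkposreal ((Cmod (u, v) - r0) / 4) ltac:(lra)). simpl. split; [lra | intros; field]. }
  destruct (functional_choice _ Ex) as [gauge Hgauge].
  destruct (compactness_value_2d (-1) 1 (-1) 1 (fun u v => gauge (u, v))) as [d Hd].
  exists (d / 2). split; [apply Rdiv_lt_0_compat; [apply cond_pos | lra]|].
  intros z Hz1 Hz2.
  destruct (Rlt_dec 0 (Re (q z))) as [P|NP]; [exact P|]. exfalso.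
  pose proof (Rmax_Cmod z) as Hmax. unfold in_disk in Hz2.
  pose proof (Rmax_l (Rabs (fst z)) (Rabs (snd z))). pose proof (Rmax_r (Rabs (fst z)) (Rabs (snd z))).
  apply (Hd (fst z) (snd z)); [apply Rabs_le_between; lra | apply Rabs_le_between; lra|].
  intros [u [v [_ [_ [H1 [H2 H3]]]]]].
  pose proof (Cmod_le_Rabs_sum (z - (u, v))%C) as Hm. simpl in Hm.
  destruct (Hgauge (u, v)) as [D1 D2].
  destruct (Rle_lt_dec (Cmod (u, v)) r0) as [Hin|Hout].
  - apply NP, (D1 Hin). unfold Rminus in *. lra.
  - specialize (D2 Hout). pose proof (Cmod_reverse_triangle (u, v) z) as Ht.
    rewrite Cmod_minus_sym in Ht. pose proof (cond_pos d). unfold Rminus in *. lra.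
Qed.

(* The supremum [r0] of the radii [r] such that [Re q > 0] on the open disk of
   radius [r] is reached by a zero of [Re q] on the circle [|z| = r0]. *)
Lemma Re_first_zero q w0 :
  (forall z, in_disk z -> Ccontinuous q z) -> 0 < Re (q 0%C) -> in_disk w0 -> Re (q w0) <= 0 ->
  exists z0, 0 < Cmod z0 < 1 /\ Re (q z0) = 0 /\ forall w, Cmod w <= Cmod z0 -> 0 <= Re (q w).
Proof.
  intros Hc Hq0 Hw0 Hqw0. unfold in_disk in Hw0.
  set (R0 := Cmod w0).
  destruct (Ccontinuous_Re_near q 0%C (Re (q 0%C)) (Hc _ in_disk_0) Hq0) as [rho [Hrho Krho]].
  assert (Hnear0 : forall z, Cmod z < rho -> 0 < Re (q z)).
  { intros z Hz. rewrite <- (Cminus_0_r z) in Hz. specialize (Krho z Hz).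
    apply Rabs_lt_between in Krho. lra. }
  assert (HR0 : rho <= R0) by (apply Rnot_lt_le; intro H; specialize (Hnear0 w0 H); lra).
  set (B := fun r => 0 <= r <= R0 /\ forall z, Cmod z < r -> 0 < Re (q z)).
  destruct (completeness B) as [r0 [Hub Hlub]].
  { exists R0. intros r [Hr _]. lra. }
  { exists 0. split; [pose proof (Cmod_ge_0 w0); unfold R0; lra | intros z Hz; pose proof (Cmod_ge_0 z); lra]. }
  assert (Hr0R : r0 <= R0) by (apply Hlub; intros r [Hr _]; lra).
  assert (Hr0 : rho / 2 <= r0) by (apply Hub; split; [lra | intros z Hz; apply Hnear0; lra]).
  assert (Hinside : forall z, Cmod z < r0 -> 0 < Re (q z)).
  { intros z Hz. destruct (classic (exists r, B r /\ Cmod z < r)) as [[r [[_ Hr] Hzr]] | NE].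
    - apply Hr, Hzr.
    - exfalso. assert (r0 <= Cmod z); [|lra].
      apply Hlub. intros r Br. apply Rnot_lt_le. intro. apply NE. exists r; auto. }
  pose proof (Re_nonneg_closed_disk q r0 ltac:(unfold R0 in *; lra) Hc Hinside) as Hclosed.
  assert (Hzero : exists z0, Cmod z0 = r0 /\ Re (q z0) <= 0).
  { apply NNPP. intros NE.
    assert (Hpos : forall z, Cmod z <= r0 -> 0 < Re (q z)).
    { intros z Hz. destruct (Rle_lt_or_eq_dec _ _ Hz) as [Hl | He]; [apply Hinside, Hl|].
      apply Rnot_le_lt. intros Hle. apply NE. exists z. auto. }
    destruct (Re_pos_closed_disk_extends q r0 ltac:(unfold R0 in *; lra) Hc Hpos) as [d [Hd Kd]].
    destruct (Rle_lt_dec (r0 + d / 2) R0) as [Hle | Hlt].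
    - assert (B (r0 + d / 2)) by (split; [lra | intros z Hz; apply Kd; unfold in_disk, R0 in *; lra]).
      specialize (Hub _ H). lra.
    - assert (0 < Re (q w0)) by (apply Kd; unfold in_disk, R0 in *; lra). lra. }
  destruct Hzero as [z0 [Hz0 Hqz0]].
  exists z0. rewrite Hz0. split; [unfold R0 in *; lra|].
  split; [apply Rle_antisym; [exact Hqz0 | apply Hclosed; lra] | exact Hclosed].
Qed.

Theorem Re_pos_of_deriv_equation (q dq Phi : C -> C) :
  (forall z, in_disk z -> Ccontinuous q z) ->
  0 < Re (q 0%C) ->
  (forall z, in_disk z -> z <> 0%C ->
     is_Cderive q z (dq z) /\ (z * dq z)%C = (1 - q z * Phi z)%C /\ 0 < Re (Phi z)) ->
  forall z, in_disk z -> 0 < Re (q z).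
Proof.
  intros Hc Hq0 Hd w0 Hw0. apply Rnot_le_lt. intros Hneg.
  destruct (Re_first_zero q w0 Hc Hq0 Hw0 Hneg) as [z0 [Hz0 [Hqz0 Hmin]]].
  assert (Hz0nz : z0 <> 0%C) by (intros E; rewrite E, Cmod_0 in Hz0; lra).
  destruct (Hd z0 ltac:(unfold in_disk; lra) Hz0nz) as [Hdq [Heq HPhi]].
  destruct (boundary_minimum_deriv q z0 (dq z0) Hdq Hqz0 Hmin) as [HRe HIm].
  rewrite Heq in HRe, HIm.
  destruct (q z0) as [a b], (Phi z0) as [c e]. unfold Re, Im in *. simpl in *. subst a.
  assert (b = 0) by nra. subst b. lra.
Qed.

(** * The quotients f / (z (1 - z)^beta) and g / (z g') *)

Open Scope C_scope.

(* [F z / (z G z)], given at [z = 0] its limit [1] when [F 0 = 0], [F'(0) = 1]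
   and [G 0 = 1]. *)
Definition zquot (F G : C -> C) (z : C) : C := if Ceq_dec z 0 then 1 else F z / (z * G z).

Definition zquot_deriv (F dF G dG : C -> C) (z : C) : C :=
  dF z / (z * G z) - F z * (G z + z * dG z) / ((z * G z) * (z * G z)).

Lemma zquot_0 (F G : C -> C) : zquot F G 0 = 1.
Proof. unfold zquot. destruct (Ceq_dec 0 0); congruence. Qed.

Lemma zquot_neq_0 (F G : C -> C) (z : C) : z <> 0 -> zquot F G z = F z / (z * G z).
Proof. intros Hz. unfold zquot. destruct (Ceq_dec z 0); [contradiction | reflexivity]. Qed.

Lemma zquot_continuous_0 (F G : C -> C) :
  F 0 = 0 -> is_Cderive F 0 1 -> Ccontinuous G 0 -> G 0 = 1 -> Ccontinuous (zquot F G) 0.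
Proof.
  intros HF0 HF HG HG0 eps Heps.
  set (e := Rmin eps 1).
  assert (He : (0 < e)%R) by (apply Rmin_pos; lra).
  assert (He1 : (e <= 1)%R) by apply Rmin_r. assert (He2 : (e <= eps)%R) by apply Rmin_l.
  destruct (HF (e / 4)%R ltac:(lra)) as [d1 [Hd1 K1]].
  destruct (HG (e / 4)%R ltac:(lra)) as [d2 [Hd2 K2]].
  exists (Rmin d1 d2). split; [apply Rmin_pos; auto|].
  intros u Hu. rewrite zquot_0. destruct (Ceq_dec u 0) as [->|Hu0].
  { rewrite zquot_0. replace (1 - 1) with (RtoC 0) by ring. rewrite Cmod_0. lra. }
  rewrite zquot_neq_0 by exact Hu0. rewrite Cminus_0_r in Hu.
  specialize (K1 u). specialize (K2 u). rewrite !Cminus_0_r, HF0 in K1. rewrite Cminus_0_r, HG0 in K2.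
  specialize (K1 (Rlt_le_trans _ _ _ Hu (Rmin_l _ _))). specialize (K2 (Rlt_le_trans _ _ _ Hu (Rmin_r _ _))).
  replace (F u - 0 - 1 * u) with (F u - u) in K1 by ring.
  assert (Hm : (0 < Cmod u)%R) by (apply Cmod_gt_0; auto).
  assert (HGm : (3/4 <= Cmod (G u))%R).
  { pose proof (Cmod_reverse_triangle 1 (G u)). rewrite Cmod_1, Cmod_minus_sym in H. lra. }
  assert (HGn : G u <> 0) by (intros E; rewrite E, Cmod_0 in HGm; lra).
  replace (F u / (u * G u) - 1) with (((F u - u) - u * (G u - 1)) / (u * G u)) by (field; auto).
  rewrite Cmod_div by (apply Cmult_neq_0; auto). rewrite Cmod_mult.
  assert (Hn : (Cmod ((F u - u) - u * (G u - 1)) <= e / 2 * Cmod u)%R).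
  { eapply Rle_trans; [apply Cmod_minus_triangle|]. rewrite Cmod_mult. nra. }
  apply (Rmult_lt_reg_r (Cmod u * Cmod (G u))); [nra|].
  unfold Rdiv. rewrite Rmult_assoc, Rinv_l, Rmult_1_r by nra.
  assert (eps * (Cmod u * (3 / 4)) <= eps * (Cmod u * Cmod (G u)))%R
    by (apply Rmult_le_compat_l; [lra | apply Rmult_le_compat_l; lra]).
  nra.
Qed.

Lemma is_Cderive_zquot (F dF G dG : C -> C) (z : C) :
  z <> 0 -> G z <> 0 -> is_Cderive F z (dF z) -> is_Cderive G z (dG z) ->
  is_Cderive (zquot F G) z (zquot_deriv F dF G dG z).
Proof.
  intros Hz HGz HF HG.
  apply is_Cderive_ext_loc with (f := fun u => F u * / (u * G u)).
  { exists (Cmod z). split; [apply Cmod_gt_0; auto|]. intros u Hu.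
    rewrite zquot_neq_0; [reflexivity|]. intros ->. rewrite Cminus_0_l, Cmod_opp in Hu. lra. }
  replace (zquot_deriv F dF G dG z)
    with (dF z * / (z * G z) + F z * ((1 * G z + z * dG z) * - / ((z * G z) * (z * G z))))
    by (unfold zquot_deriv; field; auto).
  apply (is_Cderive_mult F (fun u => / (u * G u))); [exact HF|].
  apply (is_Cderive_comp (fun v => / v) (fun u => u * G u) z
           (- / ((z * G z) * (z * G z))) (1 * G z + z * dG z)).
  - apply is_Cderive_inv, Cmult_neq_0; auto.
  - apply is_Cderive_mult; [apply is_Cderive_id | exact HG].
Qed.

Lemma zquot_regular (F dF G dG : C -> C) :
  F 0 = 0 -> is_Cderive F 0 1 -> Ccontinuous G 0 -> G 0 = 1 ->
  (forall z, in_disk z -> z <> 0 -> is_Cderive F z (dF z) /\ is_Cderive G z (dG z) /\ G z <> 0) ->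
  (forall z, in_disk z -> Ccontinuous (zquot F G) z) /\
  (forall z, in_disk z -> z <> 0 -> is_Cderive (zquot F G) z (zquot_deriv F dF G dG z)).
Proof.
  intros HF0 HF1 HG0 HG1 Hreg.
  assert (Hd : forall z, in_disk z -> z <> 0 -> is_Cderive (zquot F G) z (zquot_deriv F dF G dG z)).
  { intros z Hz Hz0. destruct (Hreg z Hz Hz0) as (HF & HG & HGz). now apply is_Cderive_zquot. }
  split; [|exact Hd].
  intros z Hz. destruct (Ceq_dec z 0) as [->|Hz0].
  - now apply zquot_continuous_0.
  - exact (is_Cderive_continuous _ _ _ (Hd z Hz Hz0)).
Qed.

(* With [dF = G], i.e. [q = g / (z g')], the quotient satisfies
   [z q' = 1 - q (1 + z g''/g')]. *)
Lemma zquot_deriv_equation (F G dG : C -> C) (z : C) : z <> 0 -> G z <> 0 ->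
  z * zquot_deriv F G G dG z = 1 - zquot F G z * (1 + z * dG z / G z).
Proof. intros Hz HG. rewrite zquot_neq_0 by exact Hz. unfold zquot_deriv. field. auto. Qed.

Lemma zquot_logderiv (f df c dc : C -> C) (be : R) (z : C) :
  z <> 0 -> f z <> 0 -> c z <> 0 -> 1 - z <> 0 -> dc z = RtoC (- be) * c z / (1 - z) ->
  1 + z * zquot_deriv f df c dc z / zquot f c z = z * df z / f z + RtoC be * (z / (1 - z)).
Proof.
  intros Hz Hf Hc H1z Hdc. rewrite zquot_neq_0 by exact Hz. unfold zquot_deriv.
  rewrite Hdc, RtoC_opp. field. auto.
Qed.

Lemma Re_div_1m_gt (z : C) : in_disk z -> (-1/2 < Re (z / (1 - z)))%R.
Proof.
  unfold in_disk, Cmod. destruct z as [x y]. simpl. intros H.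
  assert (Hxy : (x * x + y * y < 1)%R).
  { set (r := (x * (x * 1) + y * (y * 1))%R) in *.
    assert (Hr : (sqrt r * sqrt r = r)%R) by (apply sqrt_sqrt; unfold r; nra).
    pose proof (sqrt_pos r). assert (Er : r = (x * x + y * y)%R) by (unfold r; ring). nra. }
  unfold Re, Cdiv, Cinv, Cmult, Cminus, Cplus, Copp, RtoC. simpl.
  assert (HD : (0 < (1 + - x) * ((1 + - x) * 1) + (0 + - y) * ((0 + - y) * 1))%R) by nra.
  set (D := ((1 + - x) * ((1 + - x) * 1) + (0 + - y) * ((0 + - y) * 1))%R) in *.
  replace (x * ((1 + - x) / D) - y * (- (0 + - y) / D))%R with ((x * (1 - x) - y * y) / D)%R
    by (field; lra).
  apply (Rmult_lt_reg_r D); [exact HD|].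
  replace ((x * (1 - x) - y * y) / D * D)%R with (x * (1 - x) - y * y)%R by (field; lra).
  unfold D. nra.
Qed.

Lemma Re_lt_1_of_in_disk (z : C) : in_disk z -> (Re z < 1)%R.
Proof.
  intros H. pose proof (re_le_Cmod z). apply Rabs_le_between in H0. unfold in_disk in H. lra.
Qed.

Lemma analytic_on_disk_deriv (f : C -> C) :
  analytic_on_disk f -> exists df : C -> C, forall z, in_disk z -> is_Cderive f z (df z).
Proof.
  intros Han.
  destruct (functional_choice (fun z d => in_disk z -> is_Cderive f z d)) as [df Hdf].
  - intros z. destruct (classic (in_disk z)) as [Hz | Hz].
    + destruct (Han z Hz) as [d Hd]. exists d. intros _. now apply is_Cderive_iff.
    + exists 0. intros H. contradiction.
  - exists df. exact Hdf.
Qed.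

Section CesaroIntegrand.

Variables (be : R) (f df : C -> C).
Hypothesis f_0 : f 0 = 0.
Hypothesis f_deriv_0 : is_Cderive f 0 1.
Hypothesis f_deriv : forall z, in_disk z -> is_Cderive f z (df z).
Hypothesis f_neq_0 : forall z, in_disk z -> z <> 0 -> f z <> 0.

Let dc (w : C) : C := RtoC (- be) * cpow_1m be w / (1 - w).

Definition cesaro_integrand : C -> C := zquot f (cpow_1m be).

Definition cesaro_integrand_deriv : C -> C := zquot_deriv f df (cpow_1m be) dc.

Lemma cesaro_integrand_regular :
  (forall z, in_disk z -> Ccontinuous cesaro_integrand z) /\
  (forall z, in_disk z -> z <> 0 -> is_Cderive cesaro_integrand z (cesaro_integrand_deriv z)).
Proof.
  assert (Hc : forall z, in_disk z -> is_Cderive (cpow_1m be) z (dc z))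
    by (intros z Hz; apply is_Cderive_cpow_1m, Re_lt_1_of_in_disk, Hz).
  apply zquot_regular; auto.
  - exact (is_Cderive_continuous _ _ _ (Hc 0 in_disk_0)).
  - apply cpow_1m_0.
  - intros z Hz _. repeat split; auto. apply cpow_1m_neq_0.
Qed.

Lemma cesaro_integrand_neq_0 z : in_disk z -> z <> 0 -> cesaro_integrand z <> 0.
Proof.
  intros Hz Hz0. unfold cesaro_integrand. rewrite zquot_neq_0 by exact Hz0.
  apply Cmult_neq_0; [auto|]. apply Cinv_neq_0, Cmult_neq_0; [exact Hz0 | apply cpow_1m_neq_0].
Qed.

Lemma Re_cesaro_integrand_logderiv (lam : R) z : (0 <= be)%R -> in_disk z -> z <> 0 ->
  (lam < Re (z * df z / f z))%R ->
  (lam - be / 2 < Re (1 + z * cesaro_integrand_deriv z / cesaro_integrand z))%R.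
Proof.
  intros Hbe Hz Hz0 Hlam.
  assert (H1z : 1 - z <> 0).
  { intros E. pose proof (Re_lt_1_of_in_disk z Hz). apply (f_equal Re) in E.
    unfold Re in *. simpl in E. lra. }
  unfold cesaro_integrand, cesaro_integrand_deriv.
  rewrite (zquot_logderiv f df (cpow_1m be) dc be z Hz0 (f_neq_0 z Hz Hz0) (cpow_1m_neq_0 be z) H1z eq_refl).
  rewrite re_plus, re_scal_l. pose proof (Re_div_1m_gt z Hz). nra.
Qed.

Lemma C_beta_eq_line_integral z : C_beta be f z = line_integral cesaro_integrand 0 z.
Proof.
  unfold C_beta, line_integral, line_integrand, cesaro_integrand.
  apply (@RInt_ext C_R_CompleteNormedModule). intros t Ht.
  rewrite Rmin_left, Rmax_right in Ht by lra.
  match goal with |- ?l = ?r => change (@eq C l r) end.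
  destruct (Ceq_dec z 0) as [->|Hz0]; [cring|].
  replace (0 + RtoC t * (z - 0)) with (RtoC t * z) by ring.
  rewrite zquot_neq_0 by (apply Cmult_neq_0; [intros E; apply RtoC_inj in E; lra | exact Hz0]).
  unfold cpow_1m. ring.
Qed.

Lemma C_beta_deriv z : in_disk z -> is_Cderive (C_beta be f) z (cesaro_integrand z).
Proof.
  intros Hz. destruct cesaro_integrand_regular as [Hcont Hdiff].
  apply is_Cderive_ext_loc with (f := fun w => line_integral cesaro_integrand 0 w).
  - exists 1%R. split; [lra|]. intros w _. symmetry. apply C_beta_eq_line_integral.
  - apply line_integral_from_0_primitive; auto.
    intros w Hw Hw0. exists (cesaro_integrand_deriv w). auto.
Qed.

End CesaroIntegrand.

Lemma starlike_of_Re_zquot_pos (g h : C -> C) :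
  (forall z, in_disk z -> is_Cderive g z (h z)) -> g 0 = 0 -> h 0 = 1 ->
  (forall z, in_disk z -> z <> 0 -> h z <> 0) ->
  (forall z, in_disk z -> 0 < Re (zquot g h z))%R -> starlike g.
Proof.
  intros Hg Hg0 Hh0 Hhnz Hq.
  assert (Hgnz : forall z, in_disk z -> z <> 0 -> g z <> 0).
  { intros z Hz Hz0 E. pose proof (Hq z Hz) as P. rewrite zquot_neq_0, E in P by exact Hz0.
    unfold Cdiv in P. rewrite Cmult_0_l in P. simpl in P. lra. }
  split; [|split; [exact Hgnz|]].
  - split; [|split; [exact Hg0|]].
    + intros z Hz. exists (h z). apply is_Cderive_iff, Hg, Hz.
    + apply is_Cderive_iff. rewrite <- Hh0. apply Hg, in_disk_0.
  - intros z Hz Hz0 d Hd. apply is_Cderive_iff in Hd.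
    rewrite (is_Cderive_unique _ _ _ _ Hd (Hg z Hz)).
    pose proof (Hq z Hz) as P. rewrite zquot_neq_0 in P by exact Hz0.
    pose proof (Hgnz z Hz Hz0). pose proof (Hhnz z Hz Hz0).
    replace (z * h z / g z) with (/ (g z / (z * h z))) by (field; auto).
    destruct (g z / (z * h z)) as [a b]. unfold Re in *. simpl in *.
    apply Rdiv_lt_0_compat; nra.
Qed.

Theorem theorem2p10 (lam beta : R) (f : C -> C) :
  0 <= lam < 1 -> 0 <= beta <= 2 * lam ->
  starlike_of_order lam f -> starlike (C_beta beta f).
Proof.
  intros Hlam Hbe [[Han [Hf0 Hf1]] [Hfnz Hre]].
  apply is_Cderive_iff in Hf1.
  destruct (analytic_on_disk_deriv f Han) as [df Hdf].
  set (g := C_beta beta f). set (h := cesaro_integrand beta f). set (dh := cesaro_integrand_deriv beta f df).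
  destruct (cesaro_integrand_regular beta f df Hf0 Hf1 Hdf) as [Hh_cont Hh_diff].
  assert (Hg : forall z, in_disk z -> is_Cderive g z (h z)) by (apply (C_beta_deriv beta f df); auto).
  assert (Hg0 : g 0 = 0) by (unfold g; rewrite (C_beta_eq_line_integral beta f); apply line_integral_point).
  assert (Hh0 : h 0 = 1) by apply zquot_0.
  assert (Hhnz : forall z, in_disk z -> z <> 0 -> h z <> 0) by (apply cesaro_integrand_neq_0; auto).
  destruct (zquot_regular g h h dh Hg0 ltac:(rewrite <- Hh0; apply Hg, in_disk_0)
              (Hh_cont 0 in_disk_0) Hh0 ltac:(intros z Hz Hz0; auto)) as [Hq_cont Hq_diff].
  apply (starlike_of_Re_zquot_pos g h Hg Hg0 Hh0 Hhnz).
  apply (Re_pos_of_deriv_equation _ (zquot_deriv g h h dh) (fun z => 1 + z * dh z / h z) Hq_cont).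
  - rewrite zquot_0. simpl. lra.
  - intros z Hz Hz0. split; [auto | split; [apply zquot_deriv_equation; auto|]].
    pose proof (Re_cesaro_integrand_logderiv beta f df Hfnz lam z ltac:(lra) Hz Hz0
                  (Hre z Hz Hz0 (df z) (proj1 (is_Cderive_iff _ _ _) (Hdf z Hz)))).
    unfold h, dh. lra.
Qed.
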